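(* If $\sigma : S \to A^\perp \parallel B$ and $\tau : T \to B^\perp \parallel C$ are backward sequential strategies (with $A, B, C$ arenas), so is $\tau \odot \sigma$.
   Context: $e \rightarrow e'$ denotes immediate causal dependency ($e<e'$ with nothing strictly between). A strategy $\sigma:S\to A$ (between event structures with polarities) is a map of esps which is courteous (if $s_1 \rightarrow s_2$ with $\mathrm{pol}(s_1)=+$ or $\mathrm{pol}(s_2)=-$ then $\sigma s_1 \rightarrow \sigma s_2$) and receptive (for every configuration $x$ of $S$, if $\sigma x$ extends by a negative event $a$ to a configuration, there is a unique $s$ with $x\cup\{s\}$ a configuration and $\sigma s=a$). An arena is a countable esp which is a forest, conflict-free and alternating. $S$ is backward sequential if for every $s\in S$ the set $[s]=\{s'\mid s'\le s\}$ is totally ordered. The composition $\tau\odot\sigma$ is obtained by taking the pullback $(S\parallel C)\circledast(A\parallel T)$ of $\sigma\parallel C$ and $A\parallel\tau$ and projecting onto the events not mapped to $B$. *)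

From Stdlib Require Import List Relations.
Set Implicit Arguments.

(* Raw data of an event structure with polarities (true = +, false = -).
   Consistency is a predicate on (finite) sets of events. The axioms are
   the separate predicate [isES]. *)
Record esp := ESP {
  ev :> Type;
  leq : ev -> ev -> Prop;
  con : (ev -> Prop) -> Prop;
  pol : ev -> bool }.
Arguments leq {e} _ _.
Arguments con {e} _.
Arguments pol {e} _.

Definition finite {T : Type} (X : T -> Prop) : Prop :=
  exists l : list T, forall x, X x -> In x l.

Definition ltE {E : esp} (e e' : E) : Prop := leq e e' /\ e <> e'.

Definition imm {E : esp} (e e' : E) : Prop :=
  ltE e e' /\ ~ (exists d, ltE e d /\ ltE d e').

Definition isES (E : esp) : Prop :=
  (forall e : E, leq e e) /\
  (forall e1 e2 e3 : E, leq e1 e2 -> leq e2 e3 -> leq e1 e3) /\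
  (forall e1 e2 : E, leq e1 e2 -> leq e2 e1 -> e1 = e2) /\
  (forall e : E, finite (fun d => leq d e)) /\
  (forall X : E -> Prop, con X -> finite X) /\
  (forall e : E, con (fun d => d = e)) /\
  (forall X Y : E -> Prop, con Y -> (forall e, X e -> Y e) -> con X) /\
  (forall (X : E -> Prop) (e e' : E), con X -> X e -> leq e' e ->
       con (fun d => X d \/ d = e')).

Definition conf (E : esp) (x : E -> Prop) : Prop :=
  finite x /\ (forall e e' : E, x e -> leq e' e -> x e') /\ con x.

Definition image {X Y : Type} (h : X -> Y) (x : X -> Prop) : Y -> Prop :=
  fun y => exists a, x a /\ h a = y.

Definition dual (E : esp) : esp :=
  ESP (@leq E) (@con E) (fun e => negb (pol e)).

Definition par (E F : esp) : esp :=
  ESP (fun u v : ev E + ev F => match u, v with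
                   | inl a, inl b => leq a b
                   | inr a, inr b => leq a b
                   | _, _ => False end)
      (fun X => con (fun a : E => X (inl a)) /\ con (fun b : F => X (inr b)))
      (fun u => match u with inl a => pol a | inr b => pol b end).

Definition isMap {E F : esp} (h : E -> F) : Prop :=
  (forall e, pol (h e) = pol e) /\
  (forall x, conf E x -> conf F (image h x)) /\
  (forall x, conf E x -> forall e e', x e -> x e' -> h e = h e' -> e = e').

Definition courteous {E F : esp} (h : E -> F) : Prop :=
  forall s1 s2 : E, imm s1 s2 -> (pol s1 = true \/ pol s2 = false) ->
    imm (h s1) (h s2).

Definition receptive {E F : esp} (h : E -> F) : Prop :=
  forall x, conf E x -> forall a : F,
    pol a = false -> ~ image h x a -> conf F (fun b => image h x b \/ b = a) ->
    exists s, (conf E (fun e => x e \/ e = s) /\ h s = a) /\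
      forall s', conf E (fun e => x e \/ e = s') -> h s' = a -> s' = s.

Definition isStrategy {E F : esp} (h : E -> F) : Prop :=
  isES E /\ isES F /\ isMap h /\ courteous h /\ receptive h.

Definition backSeq (E : esp) : Prop :=
  forall s s1 s2 : E, leq s1 s -> leq s2 s -> leq s1 s2 \/ leq s2 s1.

Definition isArena (A : esp) : Prop :=
  isES A /\
  (exists c : A -> nat, forall a a', c a = c a' -> a = a') /\
  (forall a a1 a2 : A, leq a1 a -> leq a2 a -> leq a1 a2 \/ leq a2 a1) /\
  (forall X : A -> Prop, finite X -> con X) /\
  (forall a a' : A, imm a a' -> pol a <> pol a').

(* Pullback of (total) maps of event structures f : E -> G, g : F -> G,
   via prime secured bijections. Only the underlying functions into the
   carrier G matter. Polarity of the pullback is irrelevant (dummy). *)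
Section Pullback.
Variables (E F : esp) (G : Type) (f : E -> G) (g : F -> G).

Definition pbRel (th : E * F -> Prop) (p q : E * F) : Prop :=
  th p /\ th q /\ (ltE (fst p) (fst q) \/ ltE (snd p) (snd q)).

Definition securedBij (th : E * F -> Prop) : Prop :=
  finite th /\
  (forall p, th p -> f (fst p) = g (snd p)) /\
  conf E (fun e => exists e', th (e, e')) /\
  conf F (fun e' => exists e, th (e, e')) /\
  (forall e e1 e2, th (e, e1) -> th (e, e2) -> e1 = e2) /\
  (forall e1 e2 e', th (e1, e') -> th (e2, e') -> e1 = e2) /\
  (forall p, ~ clos_trans _ (pbRel th) p p).

Record pbEv := PbEv {
  pb_bij : E * F -> Prop;
  pb_top : E * F;
  pb_sec : securedBij pb_bij;
  pb_in : pb_bij pb_top;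
  pb_prime : forall q, pb_bij q -> clos_refl_trans _ (pbRel pb_bij) q pb_top }.

Definition pullback : esp :=
  @ESP pbEv
    (fun e e' => forall p, pb_bij e p -> pb_bij e' p)
    (fun X => finite X /\ securedBij (fun p => exists e, X e /\ pb_bij e p))
    (fun _ => true).
End Pullback.

Section Composition.
Variables (A B C S T : esp) (sigma : S -> par (dual A) B) (tau : T -> par (dual B) C).

(* sigma || C  and  A || tau, into the common carrier (A + B) + C *)
Definition sigmaC (u : par S C) : (ev A + ev B) + ev C :=
  match u with inl s => inl (sigma s) | inr c => inr c end.

Definition Atau (v : par A T) : (ev A + ev B) + ev C :=
  match v with
  | inl a => inl (inl a)
  | inr t => match tau t with inl b => inl (inr b) | inr c => inr c end
  end.

Definition interaction : esp := @pullback (par S C) (par A T) _ sigmaC Atau.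

Definition hideB (w : (ev A + ev B) + ev C) : option (ev A + ev C) :=
  match w with
  | inl (inl a) => Some (inl a)
  | inl (inr _) => None
  | inr c => Some (inr c)
  end.

(* visible events: those not mapped to B *)
Record compEv := CompEv {
  ce_ev : interaction;
  ce_img : ev A + ev C;
  ce_vis : hideB (sigmaC (fst (pb_top ce_ev))) = Some ce_img }.

Definition compESP : esp :=
  @ESP compEv
    (fun x y => leq (ce_ev x) (ce_ev y))
    (fun X => @con interaction (fun e => exists x, X x /\ ce_ev x = e))
    (fun x => @pol (par (dual A) C) (ce_img x)).

Definition compMap : compESP -> par (dual A) C := fun x => ce_img x.
End Composition.

Arguments compESP {A B C S T} sigma tau.
Arguments compMap {A B C S T} sigma tau _.

From Stdlib Require Import List Relations Classical ClassicalEpsilon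
  FunctionalExtensionality PropExtensionality ProofIrrelevance Wellfounded Lia.

(* Events of [tau (.) sigma] are prime secured bijections between configurations of [S || C]
   and [A || T] with a visible top, ordered by inclusion, so backward sequentiality reduces to
   showing that in a secured bijection the pairs causally below a given pair form a chain. This
   is proved by well-founded induction along the finite acyclic causal order of the bijection:
   two immediate predecessors of a pair are compared by backward sequentiality of [S] or [T],
   except when the pair synchronises [S] and [T] over [B] and the predecessors come from
   different sides; there the opposite polarities of the synchronised events and courtesy
   provide a synchronised predecessor through which they are compared.
   The strategy axioms follow the usual argument: courtesy transfers along visible pairs, and a
   negative move of [A] (resp. [C]) is answered by receptivity of [sigma] (resp. [tau]), the new
   pair being added on top of the interaction. *)

Lemma pred_ext {X : Type} (P Q : X -> Prop) : (forall x, P x <-> Q x) -> P = Q.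
Proof.
  intro H; apply functional_extensionality; intro x; apply propositional_extensionality; auto.
Qed.

Lemma finite_incl {X : Type} (P Q : X -> Prop) :
  finite Q -> (forall x, P x -> Q x) -> finite P.
Proof. intros [l Hl] H; exists l; auto. Qed.

Lemma finite_add {X : Type} (P : X -> Prop) (a : X) :
  finite P -> finite (fun x => P x \/ x = a).
Proof. intros [l Hl]; exists (a :: l); intros x [H|H]; simpl; subst; auto. Qed.

Lemma finite_image {X Y : Type} (g : X -> Y) (P : X -> Prop) :
  finite P -> finite (image g P).
Proof. intros [l Hl]; exists (map g l); intros y [x [Hx <-]]; apply in_map; auto. Qed.

Lemma finite_list_preimage_inj {X Y : Type} (g : X -> Y) (l : list Y) (P : X -> Prop) :
  (forall x, P x -> In (g x) l) -> (forall x y, P x -> P y -> g x = g y -> x = y) ->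
  finite P.
Proof.
  revert P; induction l as [|h l IH]; intros P Hl Hinj.
  - exists nil; intros x Hx; destruct (Hl x Hx).
  - destruct (classic (exists x, P x /\ g x = h)) as [[x0 [Hx0 Hg]]|Hn].
    + destruct (IH (fun x => P x /\ g x <> h)) as [m Hm].
      * intros x [Hx Hne]; destruct (Hl x Hx); [congruence|auto].
      * intros x y [Hx _] [Hy _]; auto.
      * exists (x0 :: m); intros x Hx; destruct (classic (g x = h)).
        -- left; apply Hinj; auto; congruence.
        -- right; apply Hm; auto.
    + apply IH; auto.
      intros x Hx; destruct (Hl x Hx); auto; exfalso; apply Hn; eauto.
Qed.

Lemma finite_preimage_inj {X Y : Type} (g : X -> Y) (P : X -> Prop) (Q : Y -> Prop) :
  finite Q -> (forall x, P x -> Q (g x)) ->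
  (forall x y, P x -> P y -> g x = g y -> x = y) -> finite P.
Proof. intros [l Hl] HPQ; apply (finite_list_preimage_inj g l); auto. Qed.

Lemma finite_inl {X Y : Type} (P : X + Y -> Prop) : finite P -> finite (fun a => P (inl a)).
Proof.
  intro H; apply (finite_preimage_inj inl _ _ H); auto; intros x y _ _ E; injection E; auto.
Qed.

Lemma finite_inr {X Y : Type} (P : X + Y -> Prop) : finite P -> finite (fun b => P (inr b)).
Proof.
  intro H; apply (finite_preimage_inj inr _ _ H); auto; intros x y _ _ E; injection E; auto.
Qed.

Lemma finite_sum {X Y : Type} (P : X + Y -> Prop) :
  finite (fun a => P (inl a)) -> finite (fun b => P (inr b)) -> finite P.
Proof.
  intros [l Hl] [m Hm]; exists (map inl l ++ map inr m).
  intros [a|b] H; apply in_or_app; [left|right]; apply in_map; auto.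
Qed.

Lemma finite_maximal {X : Type} (R : X -> X -> Prop)
  (Rtr : forall x y z, R x y -> R y z -> R x z)
  (Ran : forall x y, R x y -> R y x -> x = y) (P : X -> Prop) :
  finite P -> (exists x, P x) -> exists m, P m /\ forall y, P y -> R m y -> y = m.
Proof.
  intros [l Hl]; revert P Hl; induction l as [|h l IH]; intros P Hl [x0 Hx0].
  - destruct (Hl x0 Hx0).
  - destruct (classic (exists x, P x /\ x <> h)) as [Hex|Hn].
    + destruct (IH (fun x => P x /\ x <> h)) as [m [[Hm Hmh] Hmax]]; auto.
      { intros x [Hx Hne]; destruct (Hl x Hx); [congruence|auto]. }
      destruct (classic (P h /\ R m h)) as [[Ph Rmh]|Hno].
      * exists h; split; auto. intros y Py Rhy.
        destruct (classic (y = h)) as [|Hyh]; auto.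
        assert (y = m) by (apply Hmax; [split; auto|eapply Rtr; eauto]). subst y.
        apply Ran; auto.
      * exists m; split; auto. intros y Py Rmy.
        destruct (classic (y = h)) as [->|Hyh].
        -- exfalso; apply Hno; auto.
        -- apply Hmax; auto.
    + exists x0; split; auto. intros y Py _.
      assert (x0 = h) by (apply NNPP; intro; apply Hn; eauto).
      assert (y = h) by (apply NNPP; intro; apply Hn; eauto). congruence.
Qed.

Lemma filter_length_le {X : Type} (f g : X -> bool) (l : list X) :
  (forall x, f x = true -> g x = true) -> length (filter f l) <= length (filter g l).
Proof.
  intro H; induction l as [|h l IH]; simpl; auto.
  destruct (f h) eqn:E1; destruct (g h) eqn:E2; simpl; try lia.
  rewrite (H h E1) in E2; discriminate.
Qed.

Lemma filter_length_lt {X : Type} (f g : X -> bool) (l : list X) (a : X) :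
  (forall x, f x = true -> g x = true) -> In a l -> f a = false -> g a = true ->
  length (filter f l) < length (filter g l).
Proof.
  intros H Ha Hf Hg; induction l as [|h l IH]; simpl in *; [contradiction|].
  destruct Ha as [<-|Ha].
  - rewrite Hf, Hg; simpl. pose proof (filter_length_le f g l H); lia.
  - destruct (f h) eqn:E1; destruct (g h) eqn:E2; simpl; try (specialize (IH Ha); lia).
    rewrite (H h E1) in E2; discriminate.
Qed.

Definition decb (P : Prop) : bool := if excluded_middle_informative P then true else false.

Lemma decb_true (P : Prop) : decb P = true <-> P.
Proof.
  unfold decb; destruct (excluded_middle_informative P); split; intros; auto; discriminate.
Qed.

(* The measure of [y] is the number of elements of [l] lying transitively below [y]. *)
Lemma wf_clos_trans_finite_acyclic {X : Type} (R : X -> X -> Prop) (l : list X) :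
  (forall x y, R x y -> In x l) -> (forall x, ~ clos_trans X R x x) ->
  well_founded (clos_trans X R).
Proof.
  intros Hl Hac; apply wf_clos_trans.
  set (m := fun y => length (filter (fun x => decb (clos_trans X R x y)) l)).
  apply (wf_incl _ _ (fun x y => m x < m y)).
  - intros x y Hxy; unfold m; apply filter_length_lt with (a := x).
    + intros z Hz; cbv beta in *; rewrite decb_true in *; apply t_trans with x; auto; apply t_step; auto.
    + eapply Hl; eauto.
    + cbv beta; destruct (decb (clos_trans X R x x)) eqn:E; auto.
      apply (proj1 (decb_true _)) in E; destruct (Hac x E).
    + cbv beta; apply decb_true, t_step; auto.
  - apply (wf_inverse_image _ _ lt m), Wf_nat.lt_wf.
Qed.

Lemma clos_rt_cycle {X : Type} (R : X -> X -> Prop) a b :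
  clos_refl_trans X R a b -> clos_refl_trans X R b a -> a <> b -> clos_trans X R a a.
Proof.
  intros H1 H2 Hne; apply clos_rt_rtn1 in H2; destruct H2 as [|y z Hy Hz]; [congruence|].
  apply clos_rt_t with y; [|apply t_step; auto].
  apply rt_trans with b; auto; apply clos_rtn1_rt; auto.
Qed.

Lemma clos_rt_last_step {X : Type} (R : X -> X -> Prop) a b :
  clos_refl_trans X R a b -> a = b \/ exists c, clos_refl_trans X R a c /\ R c b.
Proof.
  intro H; apply clos_rt_rtn1 in H; destruct H as [|y z Hy Hz]; auto.
  right; exists y; split; auto; apply clos_rtn1_rt; auto.
Qed.

Lemma clos_rt_first_step {X : Type} (R : X -> X -> Prop) a b :
  clos_refl_trans X R a b -> a = b \/ exists c, R a c /\ clos_refl_trans X R c b.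
Proof.
  intro H; apply clos_rt_rt1n in H; destruct H as [|y z Hy Hz]; auto.
  right; exists y; split; auto; apply clos_rt1n_rt; auto.
Qed.

Section EventStructure.
Variable E : esp.
Hypothesis HE : isES E.

Lemma es_refl (e : E) : leq e e.
Proof. destruct HE as (h1&h2&h3&h4&h5&h6&h7&h8); auto. Qed.
Lemma es_trans (e1 e2 e3 : E) : leq e1 e2 -> leq e2 e3 -> leq e1 e3.
Proof. destruct HE as (h1&h2&h3&h4&h5&h6&h7&h8); eauto. Qed.
Lemma es_antisym (e1 e2 : E) : leq e1 e2 -> leq e2 e1 -> e1 = e2.
Proof. destruct HE as (h1&h2&h3&h4&h5&h6&h7&h8); auto. Qed.
Lemma es_finite_hist (e : E) : finite (fun d => leq d e).
Proof. destruct HE as (h1&h2&h3&h4&h5&h6&h7&h8); auto. Qed.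
Lemma es_con_incl (X Y : E -> Prop) : con Y -> (forall e, X e -> Y e) -> con X.
Proof. destruct HE as (h1&h2&h3&h4&h5&h6&h7&h8); eauto. Qed.

Lemma conf_hist (e : E) (x : E -> Prop) : conf E x -> x e -> conf E (fun d => leq d e).
Proof.
  intros (_&Hdown&Hcon) He; split; [apply es_finite_hist|split].
  - intros d d' Hd Hle; apply (es_trans _ _ _ Hle Hd).
  - apply (es_con_incl _ _ Hcon); intros d Hd; apply (Hdown e); auto.
Qed.

Lemma lt_imm_pred (e' e : E) : ltE e' e -> exists d, leq e' d /\ imm d e.
Proof.
  intro H.
  destruct (finite_maximal (@leq E) es_trans es_antisym (fun d => leq e' d /\ ltE d e))
    as [m [[H1 H2] Hm]].
  - apply (finite_incl _ _ (es_finite_hist e)); intros d [_ [Hd _]]; auto.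
  - exists e'; split; auto; apply es_refl.
  - exists m; split; auto; split; auto.
    intros [d [[Hmd Hne] Hde]]; apply Hne; symmetry; apply Hm; auto.
    split; auto; eapply es_trans; eauto.
Qed.

Lemma lt_imm_succ (e e' : E) : ltE e e' -> exists d, imm e d /\ leq d e'.
Proof.
  intro H.
  destruct (finite_maximal (fun x y => @leq E y x) (fun x y z h1 h2 => es_trans z y x h2 h1)
              (fun x y h1 h2 => es_antisym x y h2 h1) (fun d => ltE e d /\ leq d e'))
    as [m [[H1 H2] Hm]].
  - apply (finite_incl _ _ (es_finite_hist e')); intros d [_ Hd]; auto.
  - exists e'; split; auto; apply es_refl.
  - exists m; split; auto; split; auto.
    intros [d [Hed [Hdm Hne]]]; apply Hne; apply Hm; auto.
    split; auto; eapply es_trans; eauto.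
Qed.
End EventStructure.

Lemma conf_ext (E : esp) (P Q : E -> Prop) : (forall e, P e <-> Q e) -> conf E P -> conf E Q.
Proof. intros H; rewrite (pred_ext P Q H); auto. Qed.

Lemma conf_add_conflict_free (E : esp) (x : E -> Prop) (e : E) :
  (forall X : E -> Prop, finite X -> con X) -> conf E x ->
  (forall d, leq d e -> d <> e -> x d) -> conf E (fun d => x d \/ d = e).
Proof.
  intros Hcf (Hfin&Hdown&_) Hbelow.
  assert (Hf : finite (fun d => x d \/ d = e)) by (apply finite_add; auto).
  split; [exact Hf|split; [|apply Hcf, Hf]].
  intros d d' [Hd| ->] Hle; [left; eapply Hdown; eauto|].
  destruct (classic (d' = e)) as [->|Hne]; auto.
Qed.

Section Parallel.
Variables E F : esp.

Lemma leq_par_inl_r (u : par E F) (a : E) :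
  @leq (par E F) u (inl a) -> exists a', u = inl a' /\ leq a' a.
Proof. destruct u; simpl; [eauto|tauto]. Qed.
Lemma leq_par_inr_r (u : par E F) (b : F) :
  @leq (par E F) u (inr b) -> exists b', u = inr b' /\ leq b' b.
Proof. destruct u; simpl; [tauto|eauto]. Qed.
Lemma leq_par_inl_l (u : par E F) (a : E) :
  @leq (par E F) (inl a) u -> exists a', u = inl a' /\ leq a a'.
Proof. destruct u; simpl; [eauto|tauto]. Qed.
Lemma leq_par_inr_l (u : par E F) (b : F) :
  @leq (par E F) (inr b) u -> exists b', u = inr b' /\ leq b b'.
Proof. destruct u; simpl; [tauto|eauto]. Qed.

Lemma ltE_par_inl_r (u : par E F) (a : E) :
  @ltE (par E F) u (inl a) -> exists a', u = inl a' /\ ltE a' a.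
Proof.
  intros [H Hn]; destruct (leq_par_inl_r u a H) as [a' [-> Ha]].
  exists a'; repeat split; auto; congruence.
Qed.
Lemma ltE_par_inr_r (u : par E F) (b : F) :
  @ltE (par E F) u (inr b) -> exists b', u = inr b' /\ ltE b' b.
Proof.
  intros [H Hn]; destruct (leq_par_inr_r u b H) as [b' [-> Hb]].
  exists b'; repeat split; auto; congruence.
Qed.
Lemma ltE_par_inl_l (u : par E F) (a : E) :
  @ltE (par E F) (inl a) u -> exists a', u = inl a' /\ ltE a a'.
Proof.
  intros [H Hn]; destruct (leq_par_inl_l u a H) as [a' [-> Ha]].
  exists a'; repeat split; auto; congruence.
Qed.
Lemma ltE_par_inr_l (u : par E F) (b : F) :
  @ltE (par E F) (inr b) u -> exists b', u = inr b' /\ ltE b b'.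
Proof.
  intros [H Hn]; destruct (leq_par_inr_l u b H) as [b' [-> Hb]].
  exists b'; repeat split; auto; congruence.
Qed.

Lemma ltE_par_inl (a a' : E) : ltE a a' -> @ltE (par E F) (inl a) (inl a').
Proof. intros [H Hn]; split; [exact H|congruence]. Qed.
Lemma ltE_par_inr (b b' : F) : ltE b b' -> @ltE (par E F) (inr b) (inr b').
Proof. intros [H Hn]; split; [exact H|congruence]. Qed.

Lemma imm_par_inl_r (u : par E F) (a : E) :
  @imm (par E F) u (inl a) -> exists a', u = inl a' /\ imm a' a.
Proof.
  intros [H Hn]; destruct (ltE_par_inl_r u a H) as [a' [-> Ha]]; exists a'; split; auto; split; auto.
  intros [d [H1 H2]]; apply Hn; exists (inl d); split; apply ltE_par_inl; auto.
Qed.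
Lemma imm_par_inr_r (u : par E F) (b : F) :
  @imm (par E F) u (inr b) -> exists b', u = inr b' /\ imm b' b.
Proof.
  intros [H Hn]; destruct (ltE_par_inr_r u b H) as [b' [-> Hb]]; exists b'; split; auto; split; auto.
  intros [d [H1 H2]]; apply Hn; exists (inr d); split; apply ltE_par_inr; auto.
Qed.
Lemma imm_par_inl_l (u : par E F) (a : E) :
  @imm (par E F) (inl a) u -> exists a', u = inl a' /\ imm a a'.
Proof.
  intros [H Hn]; destruct (ltE_par_inl_l u a H) as [a' [-> Ha]]; exists a'; split; auto; split; auto.
  intros [d [H1 H2]]; apply Hn; exists (inl d); split; apply ltE_par_inl; auto.
Qed.
Lemma imm_par_inr_l (u : par E F) (b : F) :
  @imm (par E F) (inr b) u -> exists b', u = inr b' /\ imm b b'.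
Proof.
  intros [H Hn]; destruct (ltE_par_inr_l u b H) as [b' [-> Hb]]; exists b'; split; auto; split; auto.
  intros [d [H1 H2]]; apply Hn; exists (inr d); split; apply ltE_par_inr; auto.
Qed.

Lemma imm_par_inl (a a' : E) : imm a a' -> @imm (par E F) (inl a) (inl a').
Proof.
  intros [H Hn]; split; [apply ltE_par_inl; auto|].
  intros [d [H1 H2]]; destruct (ltE_par_inl_l d a H1) as [d' [-> Hd]].
  destruct (ltE_par_inl_r _ a' H2) as [d'' [Heq Hd']]; injection Heq as ->; apply Hn; eauto.
Qed.
Lemma imm_par_inr (b b' : F) : imm b b' -> @imm (par E F) (inr b) (inr b').
Proof.
  intros [H Hn]; split; [apply ltE_par_inr; auto|].
  intros [d [H1 H2]]; destruct (ltE_par_inr_l d b H1) as [d' [-> Hd]].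
  destruct (ltE_par_inr_r _ b' H2) as [d'' [Heq Hd']]; injection Heq as ->; apply Hn; eauto.
Qed.

Lemma conf_par_inl (X : par E F -> Prop) : conf (par E F) X -> conf E (fun a => X (inl a)).
Proof.
  intros (h1&h2&h3); split; [apply finite_inl; auto|split].
  - intros e e' He Hl; apply (h2 (inl e) (inl e')); auto.
  - destruct h3; auto.
Qed.
Lemma conf_par_inr (X : par E F -> Prop) : conf (par E F) X -> conf F (fun b => X (inr b)).
Proof.
  intros (h1&h2&h3); split; [apply finite_inr; auto|split].
  - intros e e' He Hl; apply (h2 (inr e) (inr e')); auto.
  - destruct h3; auto.
Qed.
Lemma conf_par_intro (X : par E F -> Prop) :
  conf E (fun a => X (inl a)) -> conf F (fun b => X (inr b)) -> conf (par E F) X.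
Proof.
  intros (h1&h2&h3) (k1&k2&k3); split; [apply finite_sum; auto|split; [|split; auto]].
  intros [a|b] [a'|b'] H Hl; simpl in Hl; try contradiction; eauto.
Qed.

Lemma conf_par_add_inl (X : par E F -> Prop) (e : E) :
  conf (par E F) X -> conf E (fun a => X (inl a) \/ a = e) ->
  conf (par E F) (fun u => X u \/ u = inl e).
Proof.
  intros HX He; apply conf_par_intro.
  - apply (conf_ext _ (fun a => X (inl a) \/ a = e)); [|exact He].
    intro a; split; intros [H|H]; auto; right; [congruence|injection H; auto].
  - apply (conf_ext _ (fun b => X (inr b))); [|apply conf_par_inr; auto].
    intro b; split; [auto|intros [H|H]; [auto|discriminate]].
Qed.

Lemma conf_par_add_inr (X : par E F -> Prop) (e : F) :
  conf (par E F) X -> conf F (fun b => X (inr b) \/ b = e) ->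
  conf (par E F) (fun u => X u \/ u = inr e).
Proof.
  intros HX He; apply conf_par_intro.
  - apply (conf_ext _ (fun a => X (inl a))); [|apply conf_par_inl; auto].
    intro a; split; [auto|intros [H|H]; [auto|discriminate]].
  - apply (conf_ext _ (fun b => X (inr b) \/ b = e)); [|exact He].
    intro b; split; intros [H|H]; auto; right; [congruence|injection H; auto].
Qed.

Lemma con_par_incl (HE : isES E) (HF : isES F) (X Y : par E F -> Prop) :
  con Y -> (forall u, X u -> Y u) -> con X.
Proof.
  intros [H1 H2] H; split; [eapply es_con_incl|eapply es_con_incl]; eauto;
    intros e He; exact (H _ He).
Qed.


Lemma con_par_conflict_free (HE : forall X : E -> Prop, finite X -> con X)
  (HF : forall X : F -> Prop, finite X -> con X) (X : par E F -> Prop) :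
  finite X -> con X.
Proof. intro Hf; split; [apply HE, finite_inl|apply HF, finite_inr]; auto. Qed.
End Parallel.

Lemma arena_isES (A : esp) : isArena A -> isES A.
Proof. intros (H&_); auto. Qed.

Lemma arena_conflict_free (A : esp) : isArena A -> forall X : A -> Prop, finite X -> con X.
Proof. intros (_&_&_&H&_); auto. Qed.



Lemma isES_par_arena (A C : esp) : isArena A -> isArena C -> isES (par (dual A) C).
Proof.
  intros HA HC.
  pose proof (arena_isES A HA) as (a1&a2&a3&a4&a5&a6&a7&a8).
  pose proof (arena_isES C HC) as (c1&c2&c3&c4&c5&c6&c7&c8).
  pose proof (con_par_conflict_free (dual A) C (arena_conflict_free A HA)
                (arena_conflict_free C HC)) as Hfin.
  assert (Hcon_fin : forall X : par (dual A) C -> Prop, con X -> finite X).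
  { intros X [H1 H2]; apply finite_sum; [apply a5|apply c5]; auto. }
  split; [intros [a|c]; simpl; auto|].
  split; [intros [a|c] [a'|c'] [a''|c'']; simpl; try tauto; eauto|].
  split; [intros [a|c] [a'|c']; simpl; try tauto; intros; f_equal; eauto|].
  split.
  { intros [a|c]; apply finite_sum; simpl.
    - apply (a4 a).
    - exists nil; tauto.
    - exists nil; tauto.
    - apply (c4 c). }
  split; [exact Hcon_fin|].
  split; [intro e; apply Hfin; exists (e :: nil); intros x ->; simpl; auto|].
  split; [intros X Y HY HXY; apply Hfin, (finite_incl _ _ (Hcon_fin Y HY)); auto|].
  intros X e e' HX _ _; apply Hfin, finite_add, Hcon_fin; auto.
Qed.

(** * Secured bijections *)

Section SecuredBijection.
Context {E F : esp} {G : Type} {f : E -> G} {g : F -> G}.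
Hypotheses (HE : forall X Y : E -> Prop, con Y -> (forall e, X e -> Y e) -> con X)
  (HF : forall X Y : F -> Prop, con Y -> (forall e, X e -> Y e) -> con X).

Notation SB := (securedBij E F f g).
Notation Rel th := (pbRel E F th).
Notation rtRel th := (clos_refl_trans _ (pbRel E F th)).

Section Accessors.
Variable th : E * F -> Prop.
Hypothesis Hth : SB th.

Lemma sb_finite : finite th.
Proof. destruct Hth as (h1&h2&h3&h4&h5&h6&h7); auto. Qed.
Lemma sb_match p : th p -> f (fst p) = g (snd p).
Proof. destruct Hth as (h1&h2&h3&h4&h5&h6&h7); auto. Qed.
Lemma sb_confE : conf E (fun e => exists e', th (e, e')).
Proof. destruct Hth as (h1&h2&h3&h4&h5&h6&h7); auto. Qed.
Lemma sb_confF : conf F (fun e' => exists e, th (e, e')).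
Proof. destruct Hth as (h1&h2&h3&h4&h5&h6&h7); auto. Qed.
Lemma sb_inj_l e e1 e2 : th (e, e1) -> th (e, e2) -> e1 = e2.
Proof. destruct Hth as (h1&h2&h3&h4&h5&h6&h7); eauto. Qed.
Lemma sb_inj_r e1 e2 e' : th (e1, e') -> th (e2, e') -> e1 = e2.
Proof. destruct Hth as (h1&h2&h3&h4&h5&h6&h7); eauto. Qed.
Lemma sb_acyclic p : ~ clos_trans _ (Rel th) p p.
Proof. destruct Hth as (h1&h2&h3&h4&h5&h6&h7); auto. Qed.

Lemma sb_downE a b a' : th (a, b) -> leq a' a -> exists b', th (a', b').
Proof. intros Hab Ha; destruct sb_confE as (_&Hd&_); eapply Hd; eauto. Qed.
Lemma sb_downF a b b' : th (a, b) -> leq b' b -> exists a', th (a', b').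
Proof. intros Hab Hb; destruct sb_confF as (_&Hd&_); eapply Hd; eauto. Qed.

Lemma pbRel_neq p q : Rel th p q -> p <> q.
Proof. intros (_&_&[[_ H]|[_ H]]) ->; auto. Qed.

Lemma rtRel_of_leqE r1 r2 : th r1 -> th r2 -> leq (fst r1) (fst r2) -> rtRel th r1 r2.
Proof.
  intros H1 H2 Hl; destruct r1 as [a1 b1], r2 as [a2 b2]; simpl in *.
  destruct (classic (a1 = a2)) as [<-|Hne].
  - rewrite (sb_inj_l a1 b1 b2 H1 H2); apply rt_refl.
  - apply rt_step; split; [auto|split; [auto|left; split; auto]].
Qed.

Lemma rtRel_of_leqF r1 r2 : th r1 -> th r2 -> leq (snd r1) (snd r2) -> rtRel th r1 r2.
Proof.
  intros H1 H2 Hl; destruct r1 as [a1 b1], r2 as [a2 b2]; simpl in *.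
  destruct (classic (b1 = b2)) as [<-|Hne].
  - rewrite (sb_inj_r a1 a2 b1 H1 H2); apply rt_refl.
  - apply rt_step; split; [auto|split; [auto|right; split; auto]].
Qed.
End Accessors.

Lemma sb_ext (th th' : E * F -> Prop) : (forall p, th p <-> th' p) -> SB th -> SB th'.
Proof. intro H; rewrite (pred_ext th th' H); auto. Qed.

Lemma clos_rt_pbRel_incl (th1 th2 : E * F -> Prop) p q :
  (forall r, th1 r -> th2 r) -> rtRel th1 p q -> rtRel th2 p q.
Proof.
  intros H; induction 1 as [x y (h1&h2&h3)| |]; [|apply rt_refl|eapply rt_trans; eauto].
  apply rt_step; repeat split; auto.
Qed.

Lemma clos_t_pbRel_incl (th1 th2 : E * F -> Prop) p q :
  (forall r, th1 r -> th2 r) -> clos_trans _ (Rel th1) p q -> clos_trans _ (Rel th2) p q.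
Proof.
  intros H; induction 1 as [x y (h1&h2&h3)|]; [|eapply t_trans; eauto].
  apply t_step; repeat split; auto.
Qed.

Lemma sb_sub_rt_closed th th' r q : SB th -> SB th' -> (forall p, th' p -> th p) ->
  rtRel th r q -> th' q -> th' r.
Proof.
  intros Hs Hs' Hsub H; apply clos_rt_rt1n in H.
  induction H as [|x y z Hxy Hyz IH]; auto; intro Hz; specialize (IH Hz).
  destruct Hxy as (Hx&Hy&[[Hl _]|[Hl _]]); destruct x as [a b], y as [a' b']; simpl in *.
  - destruct (sb_downE th' Hs' a' b' a IH Hl) as [b2 Hb2].
    rewrite (sb_inj_l th Hs a b b2 Hx (Hsub _ Hb2)); auto.
  - destruct (sb_downF th' Hs' a' b' b IH Hl) as [a2 Ha2].
    rewrite (sb_inj_r th Hs a a2 b Hx (Hsub _ Ha2)); auto.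
Qed.

Lemma pbEv_le_of_rt th (d e : pbEv E F f g) : SB th ->
  (forall p, pb_bij d p -> th p) -> (forall p, pb_bij e p -> th p) ->
  rtRel th (pb_top d) (pb_top e) -> forall p, pb_bij d p -> pb_bij e p.
Proof.
  intros Hs Hd He Hde p Hp.
  apply (sb_sub_rt_closed th _ p (pb_top e) Hs (pb_sec e) He); [|apply pb_in].
  eapply rt_trans; [|exact Hde].
  eapply clos_rt_pbRel_incl; [exact Hd|apply pb_prime; auto].
Qed.

Lemma pbEv_ext (d e : pbEv E F f g) : (forall p, pb_bij d p <-> pb_bij e p) -> d = e.
Proof.
  intro H; destruct d as [b1 t1 s1 i1 p1], e as [b2 t2 s2 i2 p2]; simpl in *.
  assert (b1 = b2) by (apply pred_ext; auto); subst b2.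
  assert (t1 = t2).
  { apply NNPP; intro Hne; apply (sb_acyclic b1 s1 t1); apply clos_rt_cycle with t2; auto. }
  subst t2; f_equal; apply proof_irrelevance.
Qed.

Lemma pbEv_eq_of_top th (d e : pbEv E F f g) : SB th ->
  (forall p, pb_bij d p -> th p) -> (forall p, pb_bij e p -> th p) ->
  pb_top d = pb_top e -> d = e.
Proof.
  intros Hs Hd He Ht; apply pbEv_ext; split;
    apply (pbEv_le_of_rt th); auto; rewrite Ht; apply rt_refl.
Qed.

Lemma sb_incl th th' : SB th -> (forall p, th' p -> th p) ->
  (forall a b a', th' (a, b) -> leq a' a -> exists b', th' (a', b')) ->
  (forall a b b', th' (a, b) -> leq b' b -> exists a', th' (a', b')) ->
  SB th'.
Proof.
  intros Hs Hsub HdE HdF; destruct Hs as (h1&h2&h3&h4&h5&h6&h7).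
  split; [eapply finite_incl; eauto|split; [auto|]].
  split; [|split; [|split; [|split]]].
  - destruct h3 as (c1&c2&c3).
    split; [apply (finite_incl _ _ c1); intros x [y Hy]; eauto|split].
    + intros e e' [y Hy] Hl; eauto.
    + apply (HE _ _ c3); intros x [y Hy]; eauto.
  - destruct h4 as (c1&c2&c3).
    split; [apply (finite_incl _ _ c1); intros x [y Hy]; eauto|split].
    + intros e e' [y Hy] Hl; eauto.
    + apply (HF _ _ c3); intros x [y Hy]; eauto.
  - intros; eauto.
  - intros; eauto.
  - intros p Hp; apply (h7 p); eapply clos_t_pbRel_incl; eauto.
Qed.

Definition primeSet (th : E * F -> Prop) (q : E * F) : E * F -> Prop :=
  fun r => th r /\ rtRel th r q.

Lemma primeSet_sb th q : SB th -> SB (primeSet th q).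
Proof.
  intros Hs; apply sb_incl with th; [auto|intros p [Hp _]; auto| |].
  - intros a b a' [Hab Hq] Hl; destruct (sb_downE th Hs a b a' Hab Hl) as [b' Hb'].
    exists b'; split; auto; eapply rt_trans; [|exact Hq].
    apply (rtRel_of_leqE th Hs); auto.
  - intros a b b' [Hab Hq] Hl; destruct (sb_downF th Hs a b b' Hab Hl) as [a' Ha'].
    exists a'; split; auto; eapply rt_trans; [|exact Hq].
    apply (rtRel_of_leqF th Hs); auto.
Qed.

Lemma primeSet_prime th q r : primeSet th q r -> rtRel (primeSet th q) r q.
Proof.
  intros [Hr H]; apply clos_rt_rt1n in H.
  induction H as [|x y z Hxy Hyz IH]; [apply rt_refl|].
  assert (Hy : rtRel th y z) by (apply clos_rt1n_rt; auto).
  destruct Hxy as (h1&h2&h3).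
  eapply rt_trans; [apply rt_step|apply IH; auto].
  repeat split; auto; eapply rt_trans; [apply rt_step; repeat split; eauto|]; auto.
Qed.

Definition primeOf th q (Hs : SB th) (Hq : th q) : pbEv E F f g :=
  @PbEv E F G f g (primeSet th q) q (primeSet_sb th q Hs) (conj Hq (rt_refl _ _ q))
    (primeSet_prime th q).

Lemma primeOf_incl th q Hs Hq p : pb_bij (primeOf th q Hs Hq) p -> th p.
Proof. intros [H _]; auto. Qed.

Definition addPair (th : E * F -> Prop) (n : E * F) : E * F -> Prop :=
  fun p => th p \/ p = n.

Lemma addPair_maximal th a0 b0 : SB th ->
  ~ (exists b, th (a0, b)) -> ~ (exists a, th (a, b0)) ->
  forall r, ~ Rel (addPair th (a0, b0)) (a0, b0) r.
Proof.
  intros Hs HnE HnF r (_&Hr&[[Hl Hne]|[Hl Hne]]); destruct Hr as [Hr| ->];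
    simpl in *; try (apply Hne; reflexivity); destruct r as [a b]; simpl in *.
  - apply HnE; eapply sb_downE; eauto.
  - apply HnF; eapply sb_downF; eauto.
Qed.

Lemma clos_t_addPair th n p q : (forall r, ~ Rel (addPair th n) n r) ->
  clos_trans _ (Rel (addPair th n)) p q -> clos_trans _ (Rel th) p q \/ q = n.
Proof.
  intros Hmax H; induction H as [x y Hxy|x y z Hxy IH1 Hyz IH2].
  - destruct Hxy as (Hx&Hy&Hr); destruct Hy as [Hy| ->]; auto.
    destruct Hx as [Hx| ->]; [left; apply t_step; repeat split; auto|].
    exfalso; eapply Hmax; split; [right; eauto|split; [left; exact Hy|exact Hr]].
  - destruct IH2 as [IH2|IH2]; auto.
    destruct IH1 as [IH1| ->]; [left; eapply t_trans; eauto|].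
    exfalso; apply clos_trans_t1n in Hyz; destruct Hyz as [z Hz|z w Hz _]; eapply Hmax; eauto.
Qed.

Lemma sb_addPair th a0 b0 : SB th -> f a0 = g b0 ->
  conf E (fun a => (exists b, th (a, b)) \/ a = a0) ->
  conf F (fun b => (exists a, th (a, b)) \/ b = b0) ->
  ~ (exists b, th (a0, b)) -> ~ (exists a, th (a, b0)) ->
  SB (addPair th (a0, b0)).
Proof.
  intros Hs Hm HcE HcF HnE HnF.
  pose proof (addPair_maximal th a0 b0 Hs HnE HnF) as Hmax.
  destruct Hs as (h1&h2&h3&h4&h5&h6&h7).
  split; [apply finite_add; auto|split; [intros p [Hp| ->]; auto|]].
  split.
  { refine (conf_ext _ _ _ _ HcE); intro a; split.
    - intros [[b Hb]| ->]; [exists b; left; auto|exists b0; right; auto].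
    - intros [b [Hb|Hb]]; [left; eauto|right; congruence]. }
  split.
  { refine (conf_ext _ _ _ _ HcF); intro b; split.
    - intros [[a Ha]| ->]; [exists a; left; auto|exists a0; right; auto].
    - intros [a [Ha|Ha]]; [left; eauto|right; congruence]. }
  split.
  { intros e e1 e2 [H1|H1] [H2|H2]; eauto.
    - injection H2 as -> ->; exfalso; apply HnE; eauto.
    - injection H1 as -> ->; exfalso; apply HnE; eauto.
    - congruence. }
  split.
  { intros e1 e2 e' [H1|H1] [H2|H2]; eauto.
    - injection H2 as -> ->; exfalso; apply HnF; eauto.
    - injection H1 as -> ->; exfalso; apply HnF; eauto.
    - congruence. }
  intros p Hp; destruct (clos_t_addPair th _ p p Hmax Hp) as [H| ->]; [eapply h7; eauto|].
  apply clos_trans_t1n in Hp; destruct Hp as [z Hz|z w Hz _]; eapply Hmax; eauto.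
Qed.

Lemma clos_rt_addPair th n p q : (forall r, ~ Rel (addPair th n) n r) -> q <> n ->
  rtRel (addPair th n) p q -> rtRel th p q.
Proof.
  intros Hmax Hq H; apply clos_rt_rt1n in H.
  induction H as [|x y z Hxy Hyz IH]; [apply rt_refl|].
  assert (Hy : y <> n).
  { intros ->; destruct Hyz as [|y' z' Hy' _]; [auto|eapply Hmax; eauto]. }
  assert (Hx : x <> n) by (intros ->; eapply Hmax; eauto).
  eapply rt_trans; [apply rt_step|apply IH; auto].
  destruct Hxy as ([h1|h1]&[h2|h2]&h3); repeat split; tauto.
Qed.
End SecuredBijection.

(** * The interaction of two strategies *)

Section Composition.
Variables (A B C S T : esp) (sigma : S -> par (dual A) B) (tau : T -> par (dual B) C).
Hypotheses (HA : isArena A) (HB : isArena B) (HC : isArena C)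
  (Hsigma : isStrategy sigma) (Htau : isStrategy tau) (HbS : backSeq S) (HbT : backSeq T).

Notation SC := (par S C).
Notation AT := (par A T).
Notation fS := (sigmaC (C:=C) sigma).
Notation gT := (Atau (A:=A) tau).
Notation SB := (securedBij SC AT fS gT).
Notation Rel th := (pbRel SC AT th).
Notation rtRel th := (clos_refl_trans _ (pbRel SC AT th)).
Notation CE := (compEv S T sigma tau).
Notation visible q i := (hideB A B C (fS (fst q)) = Some i).

Lemma isES_S : isES S. Proof. destruct Hsigma; auto. Qed.
Lemma isES_T : isES T. Proof. destruct Htau; auto. Qed.
Lemma isMap_sigma : isMap sigma. Proof. destruct Hsigma as (_&_&H&_); auto. Qed.
Lemma isMap_tau : isMap tau. Proof. destruct Htau as (_&_&H&_); auto. Qed.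
Lemma courteous_sigma : courteous sigma. Proof. destruct Hsigma as (_&_&_&H&_); auto. Qed.
Lemma courteous_tau : courteous tau. Proof. destruct Htau as (_&_&_&H&_); auto. Qed.

Lemma con_SC_incl (X Y : SC -> Prop) : con Y -> (forall u, X u -> Y u) -> con X.
Proof. apply con_par_incl; [apply isES_S|apply arena_isES, HC]. Qed.
Lemma con_AT_incl (X Y : AT -> Prop) : con Y -> (forall u, X u -> Y u) -> con X.
Proof. apply con_par_incl; [apply arena_isES, HA|apply isES_T]. Qed.

Lemma matching_pair_cases (p : SC * AT) : fS (fst p) = gT (snd p) ->
  (exists s a, p = (inl s, inl a) /\ sigma s = inl a) \/
  (exists s t b, p = (inl s, inr t) /\ sigma s = inr b /\ tau t = inl b) \/
  (exists c t, p = (inr c, inr t) /\ tau t = inr c).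
Proof.
  destruct p as [[s|c] [a|t]]; simpl.
  - intro H; injection H; left; eauto.
  - destruct (tau t) as [b|c] eqn:Et; intro H; [|discriminate].
    injection H as H; right; left; exists s, t, b; auto.
  - discriminate.
  - destruct (tau t) as [b|c'] eqn:Et; intro H; [discriminate|].
    injection H as <-; right; right; eauto.
Qed.

Lemma match_sigmaA s w a : fS (inl s) = gT w -> sigma s = inl a -> w = inl a.
Proof.
  simpl; intros H Hs; rewrite Hs in H.
  destruct w as [a'|t]; simpl in H; [congruence|destruct (tau t); discriminate].
Qed.
Lemma match_sigmaB s w b : fS (inl s) = gT w -> sigma s = inr b ->
  exists t, w = inr t /\ tau t = inl b.
Proof.
  simpl; intros H Hs; rewrite Hs in H.
  destruct w as [a'|t]; simpl in H; [discriminate|exists t; split; auto].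
  destruct (tau t); simpl in H; [injection H as ->; reflexivity|discriminate].
Qed.
Lemma match_A u a : fS u = gT (inl a) -> exists s, u = inl s /\ sigma s = inl a.
Proof. destruct u as [s|c]; simpl; intro H; [injection H; eauto|discriminate]. Qed.
Lemma match_tauC u t c : fS u = gT (inr t) -> tau t = inr c -> u = inr c.
Proof.
  simpl; intros H Ht; rewrite Ht in H.
  destruct u as [s|c']; simpl in H; [discriminate|congruence].
Qed.
Lemma match_tauB u t b : fS u = gT (inr t) -> tau t = inl b ->
  exists s, u = inl s /\ sigma s = inr b.
Proof.
  simpl; intros H Ht; rewrite Ht in H.
  destruct u as [s|c']; simpl in H; [injection H; eauto|discriminate].
Qed.
Lemma match_C c w : fS (inr c) = gT w -> exists t, w = inr t /\ tau t = inr c.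
Proof.
  destruct w as [a|t]; simpl; [discriminate|].
  destruct (tau t) eqn:Et; intro H; [discriminate|injection H as <-; eauto].
Qed.

Lemma pol_sigmaA s a : sigma s = inl a -> pol s = @pol (par (dual A) C) (inl a).
Proof. intro Hs; rewrite <- (proj1 isMap_sigma s), Hs; reflexivity. Qed.
Lemma pol_tauC t c : tau t = inr c -> pol t = @pol (par (dual A) C) (inr c).
Proof. intro Ht; rewrite <- (proj1 isMap_tau t), Ht; reflexivity. Qed.

Lemma compEv_eq (x y : CE) : ce_ev x = ce_ev y -> x = y.
Proof.
  destruct x as [ex ix vx], y as [ey iy vy]; simpl; intros ->.
  assert (ix = iy) by congruence; subst iy; f_equal; apply proof_irrelevance.
Qed.

Lemma compEv_cases (x : CE) :
  (exists s a, pb_top (ce_ev x) = (inl s, inl a) /\ sigma s = inl a /\ ce_img x = inl a) \/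
  (exists c t, pb_top (ce_ev x) = (inr c, inr t) /\ tau t = inr c /\ ce_img x = inr c).
Proof.
  destruct x as [e i v]; simpl in *.
  pose proof (sb_match _ (pb_sec e) _ (pb_in e)) as Hm.
  destruct (matching_pair_cases _ Hm) as [(s&a&He&Hs)|[(s&t&b&He&Hs&Ht)|(c&t&He&Ht)]];
    rewrite He in v; simpl in v.
  - rewrite Hs in v; injection v as <-; left; eauto.
  - rewrite Hs in v; discriminate.
  - injection v as <-; right; eauto.
Qed.

Lemma visible_prime (e : CE) q i : pb_bij (ce_ev e) q -> visible q i ->
  exists d : CE, ce_img d = i /\ pb_top (ce_ev d) = q /\
    forall p, pb_bij (ce_ev d) p -> pb_bij (ce_ev e) p.
Proof.
  intros Hq H.
  exists (@CompEv A B C S T sigma tau (primeOf con_SC_incl con_AT_incl _ q (pb_sec _) Hq) i H).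
  split; [reflexivity|split; [reflexivity|]]; intros p Hp; eapply primeOf_incl; eauto.
Qed.

Lemma sb_conf_S th : SB th -> conf S (fun s => exists w, th (inl s, w)).
Proof.
  intro H; apply (conf_par_inl S C (fun u => exists w, th (u, w))); exact (sb_confE th H).
Qed.
Lemma sb_conf_T th : SB th -> conf T (fun t => exists u, th (u, inr t)).
Proof.
  intro H; apply (conf_par_inr A T (fun w => exists u, th (u, w))); exact (sb_confF th H).
Qed.

Lemma sb_sigma_reflect th s w s' w' : SB th -> th (inl s, w) -> th (inl s', w') ->
  leq (sigma s') (sigma s) -> leq s' s.
Proof.
  intros Hth H1 H2 Hle; pose proof (sb_conf_S th Hth) as Hx.
  destruct isMap_sigma as (_&Hcf&Hinj).
  destruct (Hcf _ (conf_hist S isES_S s _ Hx (ex_intro _ w H1))) as (_&Hd&_).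
  destruct (Hd (sigma s) (sigma s')) as [s'' [Hs'' Heq]]; [|exact Hle|].
  - exists s; split; auto; apply es_refl, isES_S.
  - replace s' with s''; auto.
    apply (Hinj _ Hx); eauto.
    destruct Hx as (_&Hdown&_); apply (Hdown s); eauto.
Qed.

Lemma sb_tau_reflect th t u t' u' : SB th -> th (u, inr t) -> th (u', inr t') ->
  leq (tau t') (tau t) -> leq t' t.
Proof.
  intros Hth H1 H2 Hle; pose proof (sb_conf_T th Hth) as Hx.
  destruct isMap_tau as (_&Hcf&Hinj).
  destruct (Hcf _ (conf_hist T isES_T t _ Hx (ex_intro _ u H1))) as (_&Hd&_).
  destruct (Hd (tau t) (tau t')) as [t'' [Ht'' Heq]]; [|exact Hle|].
  - exists t; split; auto; apply es_refl, isES_T.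
  - replace t' with t''; auto.
    apply (Hinj _ Hx); eauto.
    destruct Hx as (_&Hdown&_); apply (Hdown t); eauto.
Qed.

(* By courtesy, a negative visible pair has an immediate predecessor that is visible too,
   and a positive one an immediate successor. *)
Lemma negA_visible_pred th s a r : SB th -> th (inl s, inl a) -> sigma s = inl a ->
  pol s = false -> Rel th r (inl s, inl a) ->
  exists s0 a0, th (inl s0, inl a0) /\ sigma s0 = inl a0 /\ imm a0 a /\
    rtRel th r (inl s0, inl a0) /\ Rel th (inl s0, inl a0) (inl s, inl a).
Proof.
  intros Hth Hq Hs Hp (Hr&_&[Hl|Hl]).
  - destruct (ltE_par_inl_r S C (fst r) s Hl) as [s1 [Hr1 Hs1]].
    destruct (lt_imm_pred S isES_S s1 s Hs1) as [s0 [Hs10 Hs0]].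
    pose proof (courteous_sigma s0 s Hs0 (or_intror Hp)) as Hc; rewrite Hs in Hc.
    destruct (imm_par_inl_r (dual A) B (sigma s0) a Hc) as [a0 [Hs0a Ha0]].
    destruct (sb_downE th Hth (inl s) (inl a) (inl s0) Hq (proj1 (proj1 Hs0))) as [w0 Hw0].
    rewrite (match_sigmaA s0 w0 a0 (sb_match th Hth _ Hw0) Hs0a) in Hw0.
    exists s0, a0; do 3 (split; [auto|]); split.
    + apply (rtRel_of_leqE th Hth); auto; rewrite Hr1; exact Hs10.
    + split; [auto|split; [auto|left; apply ltE_par_inl, Hs0]].
  - destruct (ltE_par_inl_r A T (snd r) a Hl) as [a1 [Hr1 Ha1]].
    destruct (lt_imm_pred A (arena_isES A HA) a1 a Ha1) as [a0 [Ha10 Ha0]].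
    destruct (sb_downF th Hth (inl s) (inl a) (inl a0) Hq (proj1 (proj1 Ha0))) as [u0 Hu0].
    destruct (match_A u0 a0 (sb_match th Hth _ Hu0)) as [s0 [-> Hs0]].
    exists s0, a0; do 3 (split; [auto|]); split.
    + apply (rtRel_of_leqF th Hth); auto; rewrite Hr1; exact Ha10.
    + split; [auto|split; [auto|right; apply ltE_par_inl, Ha0]].
Qed.

Lemma negC_visible_pred th c t r : SB th -> th (inr c, inr t) -> tau t = inr c ->
  pol t = false -> Rel th r (inr c, inr t) ->
  exists c0 t0, th (inr c0, inr t0) /\ tau t0 = inr c0 /\ imm c0 c /\
    rtRel th r (inr c0, inr t0) /\ Rel th (inr c0, inr t0) (inr c, inr t).
Proof.
  intros Hth Hq Ht Hp (Hr&_&[Hl|Hl]).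
  - destruct (ltE_par_inr_r S C (fst r) c Hl) as [c1 [Hr1 Hc1]].
    destruct (lt_imm_pred C (arena_isES C HC) c1 c Hc1) as [c0 [Hc10 Hc0]].
    destruct (sb_downE th Hth (inr c) (inr t) (inr c0) Hq (proj1 (proj1 Hc0))) as [w0 Hw0].
    destruct (match_C c0 w0 (sb_match th Hth _ Hw0)) as [t0 [-> Ht0]].
    exists c0, t0; do 3 (split; [auto|]); split.
    + apply (rtRel_of_leqE th Hth); auto; rewrite Hr1; exact Hc10.
    + split; [auto|split; [auto|left; apply ltE_par_inr, Hc0]].
  - destruct (ltE_par_inr_r A T (snd r) t Hl) as [t1 [Hr1 Ht1]].
    destruct (lt_imm_pred T isES_T t1 t Ht1) as [t0 [Ht10 Ht0]].
    pose proof (courteous_tau t0 t Ht0 (or_intror Hp)) as Hc; rewrite Ht in Hc.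
    destruct (imm_par_inr_r (dual B) C (tau t0) c Hc) as [c0 [Ht0c Hc0]].
    destruct (sb_downF th Hth (inr c) (inr t) (inr t0) Hq (proj1 (proj1 Ht0))) as [u0 Hu0].
    rewrite (match_tauC u0 t0 c0 (sb_match th Hth _ Hu0) Ht0c) in Hu0.
    exists c0, t0; do 3 (split; [auto|]); split.
    + apply (rtRel_of_leqF th Hth); auto; rewrite Hr1; exact Ht10.
    + split; [auto|split; [auto|right; apply ltE_par_inr, Ht0]].
Qed.

Lemma posA_visible_succ th s a r : SB th -> th (inl s, inl a) -> sigma s = inl a ->
  pol s = true -> Rel th (inl s, inl a) r ->
  exists s1 a1, th (inl s1, inl a1) /\ sigma s1 = inl a1 /\ imm a a1 /\
    Rel th (inl s, inl a) (inl s1, inl a1) /\ rtRel th (inl s1, inl a1) r.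
Proof.
  intros Hth Hq Hs Hp (_&Hr&[Hl|Hl]); destruct r as [u w]; simpl in Hl.
  - destruct (ltE_par_inl_l S C u s Hl) as [s' [-> Hs']].
    destruct (lt_imm_succ S isES_S s s' Hs') as [s1 [Hs1 Hs1']].
    pose proof (courteous_sigma s s1 Hs1 (or_introl Hp)) as Hc; rewrite Hs in Hc.
    destruct (imm_par_inl_l (dual A) B (sigma s1) a Hc) as [a1 [Hs1a Ha1]].
    destruct (sb_downE th Hth (inl s') w (inl s1) Hr Hs1') as [w1 Hw1].
    rewrite (match_sigmaA s1 w1 a1 (sb_match th Hth _ Hw1) Hs1a) in Hw1.
    exists s1, a1; do 3 (split; [auto|]); split.
    + split; [auto|split; [auto|left; apply ltE_par_inl, Hs1]].
    + apply (rtRel_of_leqE th Hth); auto.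
  - destruct (ltE_par_inl_l A T w a Hl) as [a' [-> Ha']].
    destruct (lt_imm_succ A (arena_isES A HA) a a' Ha') as [a1 [Ha1 Ha1']].
    destruct (sb_downF th Hth u (inl a') (inl a1) Hr Ha1') as [u1 Hu1].
    destruct (match_A u1 a1 (sb_match th Hth _ Hu1)) as [s1 [-> Hs1]].
    exists s1, a1; do 3 (split; [auto|]); split.
    + split; [auto|split; [auto|right; apply ltE_par_inl, Ha1]].
    + apply (rtRel_of_leqF th Hth); auto.
Qed.

Lemma posC_visible_succ th c t r : SB th -> th (inr c, inr t) -> tau t = inr c ->
  pol t = true -> Rel th (inr c, inr t) r ->
  exists c1 t1, th (inr c1, inr t1) /\ tau t1 = inr c1 /\ imm c c1 /\
    Rel th (inr c, inr t) (inr c1, inr t1) /\ rtRel th (inr c1, inr t1) r.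
Proof.
  intros Hth Hq Ht Hp (_&Hr&[Hl|Hl]); destruct r as [u w]; simpl in Hl.
  - destruct (ltE_par_inr_l S C u c Hl) as [c' [-> Hc']].
    destruct (lt_imm_succ C (arena_isES C HC) c c' Hc') as [c1 [Hc1 Hc1']].
    destruct (sb_downE th Hth (inr c') w (inr c1) Hr Hc1') as [w1 Hw1].
    destruct (match_C c1 w1 (sb_match th Hth _ Hw1)) as [t1 [-> Ht1]].
    exists c1, t1; do 3 (split; [auto|]); split.
    + split; [auto|split; [auto|left; apply ltE_par_inr, Hc1]].
    + apply (rtRel_of_leqE th Hth); auto.
  - destruct (ltE_par_inr_l A T w t Hl) as [t' [-> Ht']].
    destruct (lt_imm_succ T isES_T t t' Ht') as [t1 [Ht1 Ht1']].
    pose proof (courteous_tau t t1 Ht1 (or_introl Hp)) as Hc; rewrite Ht in Hc.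
    destruct (imm_par_inr_l (dual B) C (tau t1) c Hc) as [c1 [Ht1c Hc1]].
    destruct (sb_downF th Hth u (inr t') (inr t1) Hr Ht1') as [u1 Hu1].
    rewrite (match_tauC u1 t1 c1 (sb_match th Hth _ Hu1) Ht1c) in Hu1.
    exists c1, t1; do 3 (split; [auto|]); split.
    + split; [auto|split; [auto|right; apply ltE_par_inr, Ht1]].
    + apply (rtRel_of_leqF th Hth); auto.
Qed.

Definition unionBij (X : CE -> Prop) : SC * AT -> Prop :=
  fun p => exists x, X x /\ pb_bij (ce_ev x) p.

Lemma con_compESP (X : compESP sigma tau -> Prop) : con X <-> finite X /\ SB (unionBij X).
Proof.
  simpl; match goal with |- _ /\ securedBij _ _ _ _ ?P <-> _ =>
    replace P with (unionBij X) end.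
  2:{ apply pred_ext; intro p; split.
      - intros [x [Hx Hp]]; eauto.
      - intros [e [[x [Hx <-]] Hp]]; exists x; auto. }
  split; intros [Hf Hs]; split; auto.
  - apply (finite_preimage_inj (fun z : CE => ce_ev z) X _ Hf).
    + intros z Hz; exists z; auto.
    + intros z1 z2 _ _ H; apply compEv_eq; auto.
  - apply (finite_incl _ _ (finite_image (fun x : CE => ce_ev x) X Hf)).
    intros e [x [Hx He]]; exists x; auto.
Qed.

Lemma conf_compESP_sb (x : compESP sigma tau -> Prop) : conf _ x -> SB (unionBij x).
Proof. intros (_&_&H); apply con_compESP in H; tauto. Qed.

Lemma conf_compESP_down (x : compESP sigma tau -> Prop) e e' :
  conf _ x -> x e -> leq e' e -> x e'.
Proof. intros (_&H&_); eauto. Qed.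

Lemma isES_compESP : isES (compESP sigma tau).
Proof.
  split; [intros e p H; exact H|].
  split; [intros e1 e2 e3 H1 H2 p Hp; apply H2, H1, Hp|].
  split.
  { intros e1 e2 H1 H2; apply compEv_eq, pbEv_ext; intro p; split; [apply H1|apply H2]. }
  split.
  { intro e; apply (finite_preimage_inj (fun y : CE => pb_top (ce_ev y)) _ (pb_bij (ce_ev e))).
    - apply (sb_finite _ (pb_sec _)).
    - intros y Hy; apply Hy, pb_in.
    - intros y z Hy Hz Ht; apply compEv_eq.
      apply (pbEv_eq_of_top _ _ _ (pb_sec (ce_ev e))); auto. }
  split; [intros X HX; apply con_compESP in HX; tauto|].
  split.
  { intro e; apply con_compESP; split; [exists (e :: nil); intros x ->; simpl; auto|].
    apply (sb_ext (pb_bij (ce_ev e))); [|apply pb_sec].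
    intro p; split; [intro H; exists e; auto|intros [x [-> H]]; auto]. }
  split.
  { intros X Y HY HXY; apply con_compESP in HY; destruct HY as [Hf Hs].
    apply con_compESP; split; [eapply finite_incl; eauto|].
    apply (sb_incl con_SC_incl con_AT_incl (unionBij Y)); auto.
    - intros p [x [Hx Hp]]; exists x; auto.
    - intros a b a' [x [Hx Hp]] Hl.
      destruct (sb_downE _ (pb_sec (ce_ev x)) a b a' Hp Hl) as [b' Hb']; exists b', x; auto.
    - intros a b b' [x [Hx Hp]] Hl.
      destruct (sb_downF _ (pb_sec (ce_ev x)) a b b' Hp Hl) as [a' Ha']; exists a', x; auto. }
  intros X e e' HX He Hle; apply con_compESP in HX; destruct HX as [Hf Hs].
  apply con_compESP; split; [apply finite_add; auto|].
  apply (sb_ext (unionBij X)); auto; intro p; split.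
  - intros [x [Hx Hp]]; exists x; auto.
  - intros [x [[Hx| ->] Hp]]; [exists x; auto|exists e; split; auto; apply Hle; auto].
Qed.

Lemma visible_in_image (x : compESP sigma tau -> Prop) q i : conf _ x ->
  unionBij x q -> visible q i -> image (compMap sigma tau) x i.
Proof.
  intros Hx [e [He Hq]] Hv; destruct (visible_prime e q i Hq Hv) as [d [Hd1 [Hd2 Hd3]]].
  exists d; split; auto; eapply conf_compESP_down; eauto.
Qed.

Lemma isMap_compMap : isMap (compMap sigma tau).
Proof.
  split; [intro e; reflexivity|split].
  - intros x Hx; pose proof (conf_compESP_sb x Hx) as Hs.
    assert (Hf : finite (image (compMap sigma tau) x))
      by (apply finite_image; destruct Hx; auto).
    split; [exact Hf|split].
    + intros i i' [v [Hv <-]] Hle; unfold compMap in *.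
      assert (Hin : unionBij x (pb_top (ce_ev v))) by (exists v; split; auto; apply pb_in).
      destruct (compEv_cases v) as [(s&a&Ht&Hs1&Hi)|(c&t&Ht&Htc&Hi)];
        rewrite Hi in Hle; rewrite Ht in Hin.
      * destruct (leq_par_inl_r (dual A) C i' a Hle) as [a' [-> Ha']].
        destruct (sb_downF _ Hs _ _ (inl a') Hin Ha') as [u' Hu'].
        destruct (match_A u' a' (sb_match _ Hs _ Hu')) as [s' [-> Hs']].
        apply (visible_in_image x _ _ Hx Hu'); simpl; rewrite Hs'; reflexivity.
      * destruct (leq_par_inr_r (dual A) C i' c Hle) as [c' [-> Hc']].
        destruct (sb_downE _ Hs _ _ (inr c') Hin Hc') as [w' Hw'].
        apply (visible_in_image x _ _ Hx Hw'); reflexivity.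
    + apply con_par_conflict_free; [exact (arena_conflict_free A HA)|exact (arena_conflict_free C HC)|auto].
  - intros x Hx e e' He He' Heq; unfold compMap in Heq.
    pose proof (conf_compESP_sb x Hx) as Hs.
    apply compEv_eq, (pbEv_eq_of_top (unionBij x)); auto.
    { intros p Hp; exists e; auto. }
    { intros p Hp; exists e'; auto. }
    assert (H1 : unionBij x (pb_top (ce_ev e))) by (exists e; split; auto; apply pb_in).
    assert (H2 : unionBij x (pb_top (ce_ev e'))) by (exists e'; split; auto; apply pb_in).
    destruct (compEv_cases e) as [(s&a&Ht&Hs1&Hi)|(c&t&Ht&Htc&Hi)];
    destruct (compEv_cases e') as [(s'&a'&Ht'&Hs1'&Hi')|(c'&t'&Ht'&Htc'&Hi')];
      rewrite Hi, Hi' in Heq; try discriminate; injection Heq as <-; rewrite Ht, Ht' in *.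
    + rewrite (sb_inj_r _ Hs _ _ _ H1 H2); auto.
    + rewrite (sb_inj_l _ Hs _ _ _ H1 H2); auto.
Qed.

(** * Courtesy *)

Lemma compEv_lt_top (x y : CE) : (forall p, pb_bij (ce_ev x) p -> pb_bij (ce_ev y) p) ->
  x <> y -> rtRel (pb_bij (ce_ev y)) (pb_top (ce_ev x)) (pb_top (ce_ev y)) /\
  pb_top (ce_ev x) <> pb_top (ce_ev y).
Proof.
  intros Hxy Hne; split; [apply pb_prime, Hxy, pb_in|].
  intro Ht; apply Hne, compEv_eq, (pbEv_eq_of_top _ _ _ (pb_sec (ce_ev y))); auto.
Qed.

(* A visible pair strictly between the tops of [x] and [y] would yield an event of the
   composition strictly between [x] and [y]. *)
Lemma imm_visible_succ (x y : compESP sigma tau) q i : imm x y ->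
  pb_bij (ce_ev y) q -> visible q i -> Rel (pb_bij (ce_ev y)) (pb_top (ce_ev x)) q ->
  ce_img y = i.
Proof.
  intros [[Hxy _] Hnot] Hq Hv HR.
  destruct (visible_prime y q i Hq Hv) as [z [Hz1 [Hz2 Hz3]]].
  assert (Hxz : forall p, pb_bij (ce_ev x) p -> pb_bij (ce_ev z) p).
  { apply (pbEv_le_of_rt _ _ _ (pb_sec (ce_ev y))); auto; rewrite Hz2; apply rt_step; auto. }
  assert (Hnxz : x <> z) by (intros <-; rewrite <- Hz2 in HR; apply (pbRel_neq _ _ _ HR); auto).
  destruct (classic (z = y)) as [<-|Hzy]; auto.
  exfalso; apply Hnot; exists z; split; split; auto.
Qed.

Lemma imm_visible_pred (x y : compESP sigma tau) q i : imm x y ->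
  pb_bij (ce_ev y) q -> visible q i -> rtRel (pb_bij (ce_ev y)) (pb_top (ce_ev x)) q ->
  Rel (pb_bij (ce_ev y)) q (pb_top (ce_ev y)) -> ce_img x = i.
Proof.
  intros [[Hxy _] Hnot] Hq Hv Hrt HR.
  destruct (visible_prime y q i Hq Hv) as [z [Hz1 [Hz2 Hz3]]].
  assert (Hxz : forall p, pb_bij (ce_ev x) p -> pb_bij (ce_ev z) p).
  { apply (pbEv_le_of_rt _ _ _ (pb_sec (ce_ev y))); auto; rewrite Hz2; auto. }
  assert (Hnzy : z <> y) by (intros ->; rewrite <- Hz2 in HR; apply (pbRel_neq _ _ _ HR); auto).
  destruct (classic (x = z)) as [<-|Hnxz]; auto.
  exfalso; apply Hnot; exists z; split; split; auto.
Qed.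

Lemma courteous_compMap : courteous (compMap sigma tau).
Proof.
  intros x y Himm Hpol; pose proof Himm as [[Hxy Hne] _]; simpl in Hxy.
  destruct (compEv_lt_top x y Hxy Hne) as [Hrt Htne].
  pose proof (pb_sec (ce_ev y)) as Hs; pose proof (Hxy _ (pb_in (ce_ev x))) as Hx.
  unfold compMap; destruct Hpol as [Hpx|Hpy].
  - destruct (clos_rt_first_step _ _ _ Hrt) as [Heq|[r [Hr _]]]; [contradiction|].
    destruct (compEv_cases x) as [(s&a&Ht&Hsa&Hi)|(c&t&Ht&Htc&Hi)]; simpl in Hpx;
      rewrite Hi in *; rewrite Ht in Hx, Hr.
    + destruct (posA_visible_succ _ s a r Hs Hx Hsa ltac:(rewrite (pol_sigmaA s a Hsa); auto) Hr)
        as (s1&a1&Hq1&Hs1&Ha1&HR1&_).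
      rewrite (imm_visible_succ x y _ (inl a1) Himm Hq1 ltac:(simpl; rewrite Hs1; auto)
                 ltac:(rewrite Ht; auto)).
      apply (imm_par_inl (dual A) C); exact Ha1.
    + destruct (posC_visible_succ _ c t r Hs Hx Htc ltac:(rewrite (pol_tauC t c Htc); auto) Hr)
        as (c1&t1&Hq1&Ht1&Hc1&HR1&_).
      rewrite (imm_visible_succ x y _ (inr c1) Himm Hq1 eq_refl ltac:(rewrite Ht; auto)).
      apply (imm_par_inr (dual A) C); exact Hc1.
  - destruct (clos_rt_last_step _ _ _ Hrt) as [Heq|[r [Hr Hry]]]; [contradiction|].
    pose proof (pb_in (ce_ev y)) as Hy.
    destruct (compEv_cases y) as [(s&a&Ht&Hsa&Hi)|(c&t&Ht&Htc&Hi)]; simpl in Hpy;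
      rewrite Hi in *; rewrite Ht in Hy, Hry.
    + destruct (negA_visible_pred _ s a r Hs Hy Hsa ltac:(rewrite (pol_sigmaA s a Hsa); auto) Hry)
        as (s0&a0&Hq0&Hs0&Ha0&Hrt0&HR0).
      rewrite (imm_visible_pred x y _ (inl a0) Himm Hq0 ltac:(simpl; rewrite Hs0; auto)
                 ltac:(eapply rt_trans; eauto) ltac:(rewrite Ht; auto)).
      apply (imm_par_inl (dual A) C); exact Ha0.
    + destruct (negC_visible_pred _ c t r Hs Hy Htc ltac:(rewrite (pol_tauC t c Htc); auto) Hry)
        as (c0&t0&Hq0&Ht0&Hc0&Hrt0&HR0).
      rewrite (imm_visible_pred x y _ (inr c0) Himm Hq0 eq_refl
                 ltac:(eapply rt_trans; eauto) ltac:(rewrite Ht; auto)).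
      apply (imm_par_inr (dual A) C); exact Hc0.
Qed.

(** * Backward sequentiality *)

Definition chainBelow (th : SC * AT -> Prop) (q : SC * AT) : Prop :=
  forall r1 r2, rtRel th r1 q -> rtRel th r2 q -> rtRel th r1 r2 \/ rtRel th r2 r1.

Lemma pred_sigmaA_pair th s a r : SB th -> th (inl s, inl a) -> sigma s = inl a ->
  Rel th r (inl s, inl a) -> exists s1 w1, r = (inl s1, w1) /\ ltE s1 s.
Proof.
  intros Hth Hq Hs (Hr&_&[Hl|Hl]); destruct r as [u w]; simpl in Hl.
  - destruct (ltE_par_inl_r S C u s Hl) as [s1 [-> Hs1]]; eauto.
  - destruct (ltE_par_inl_r A T w a Hl) as [a1 [-> Ha1]].
    destruct (match_A u a1 (sb_match th Hth _ Hr)) as [s1 [-> Hs1]].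
    exists s1, (inl a1); split; auto; split.
    + apply (sb_sigma_reflect th s (inl a) s1 (inl a1) Hth Hq Hr); rewrite Hs1, Hs; apply Ha1.
    + intros ->; apply (proj2 Ha1).
      pose proof (sb_inj_l th Hth _ _ _ Hr Hq) as E; injection E; auto.
Qed.

Lemma pred_tauC_pair th c t r : SB th -> th (inr c, inr t) -> tau t = inr c ->
  Rel th r (inr c, inr t) -> exists u1 t1, r = (u1, inr t1) /\ ltE t1 t.
Proof.
  intros Hth Hq Ht (Hr&_&[Hl|Hl]); destruct r as [u w]; simpl in Hl.
  - destruct (ltE_par_inr_r S C u c Hl) as [c1 [-> Hc1]].
    destruct (match_C c1 w (sb_match th Hth _ Hr)) as [t1 [-> Ht1]].
    exists (inr c1), t1; split; auto; split.
    + apply (sb_tau_reflect th t (inr c) t1 (inr c1) Hth Hq Hr); rewrite Ht1, Ht; apply Hc1.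
    + intros ->; apply (proj2 Hc1).
      pose proof (sb_inj_r th Hth _ _ _ Hr Hq) as E; injection E; auto.
  - destruct (ltE_par_inr_r A T w t Hl) as [t1 [-> Ht1]]; eauto.
Qed.

(* The synchronisation case: [q = (s, t)] lies over [B] and has an [S]-predecessor and a
   [T]-predecessor. As [s] and [t] have opposite polarities, courtesy on the negative side gives
   a synchronised pair [(s0, t0)] immediately below [q] and above the predecessor on that side;
   backward sequentiality on the other side compares it with the other predecessor, so either
   both predecessors lie below [(s0, t0)], where the induction hypothesis applies, or they are
   directly ordered. *)
Lemma sync_preds_comparable th s t b s1 w1 u2 t2 : SB th -> th (inl s, inr t) ->
  sigma s = inr b -> tau t = inl b ->
  (forall y, clos_trans _ (Rel th) y (inl s, inr t) -> th y -> chainBelow th y) ->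
  th (inl s1, w1) -> ltE s1 s -> th (u2, inr t2) -> ltE t2 t ->
  rtRel th (inl s1, w1) (u2, inr t2) \/ rtRel th (u2, inr t2) (inl s1, w1).
Proof.
  intros Hth Hq Hs Ht IH H1 Hs1 H2 Ht2.
  destruct (pol s) eqn:Hp.
  - assert (Hpt : pol t = false).
    { rewrite <- (proj1 isMap_tau t), Ht; rewrite <- (proj1 isMap_sigma s), Hs in Hp.
      simpl in *; rewrite Hp; reflexivity. }
    destruct (lt_imm_pred T isES_T t2 t Ht2) as [t0 [Ht20 Ht0]].
    pose proof (courteous_tau t0 t Ht0 (or_intror Hpt)) as Hc; rewrite Ht in Hc.
    destruct (imm_par_inl_r (dual B) C (tau t0) b Hc) as [b0 [Ht0b Hb0]].
    destruct (sb_downF th Hth (inl s) (inr t) (inr t0) Hq (proj1 (proj1 Ht0))) as [u0 Hu0].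
    destruct (match_tauB u0 t0 b0 (sb_match th Hth _ Hu0) Ht0b) as [s0 [-> Hs0]].
    assert (Hs0s : leq s0 s).
    { apply (sb_sigma_reflect th s (inr t) s0 (inr t0) Hth Hq Hu0); rewrite Hs0, Hs; apply Hb0. }
    destruct (HbS s s1 s0 (proj1 Hs1) Hs0s) as [Hl|Hl].
    + apply (IH (inl s0, inr t0)); auto.
      * apply t_step; split; [auto|split; [auto|right]]; apply ltE_par_inr, Ht0.
      * apply (rtRel_of_leqE th Hth); auto.
      * apply (rtRel_of_leqF th Hth); auto.
    + right; eapply rt_trans; [|apply (rtRel_of_leqE th Hth _ _ Hu0 H1 Hl)].
      apply (rtRel_of_leqF th Hth); auto.
  - destruct (lt_imm_pred S isES_S s1 s Hs1) as [s0 [Hs10 Hs0]].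
    pose proof (courteous_sigma s0 s Hs0 (or_intror Hp)) as Hc; rewrite Hs in Hc.
    destruct (imm_par_inr_r (dual A) B (sigma s0) b Hc) as [b0 [Hs0b Hb0]].
    destruct (sb_downE th Hth (inl s) (inr t) (inl s0) Hq (proj1 (proj1 Hs0))) as [w0 Hw0].
    destruct (match_sigmaB s0 w0 b0 (sb_match th Hth _ Hw0) Hs0b) as [t0 [-> Ht0]].
    assert (Ht0t : leq t0 t).
    { apply (sb_tau_reflect th t (inl s) t0 (inl s0) Hth Hq Hw0); rewrite Ht0, Ht; apply Hb0. }
    destruct (HbT t t2 t0 (proj1 Ht2) Ht0t) as [Hl|Hl].
    + apply (IH (inl s0, inr t0)); auto.
      * apply t_step; split; [auto|split; [auto|left]]; apply ltE_par_inl, Hs0.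
      * apply (rtRel_of_leqE th Hth); auto.
      * apply (rtRel_of_leqF th Hth); auto.
    + left; eapply rt_trans; [|apply (rtRel_of_leqF th Hth _ _ Hw0 H2 Hl)].
      apply (rtRel_of_leqE th Hth); auto.
Qed.

Lemma imm_preds_comparable th q : SB th -> th q ->
  (forall y, clos_trans _ (Rel th) y q -> th y -> chainBelow th y) ->
  forall r1 r2, Rel th r1 q -> Rel th r2 q -> rtRel th r1 r2 \/ rtRel th r2 r1.
Proof.
  intros Hth Hq IH r1 r2 H1 H2.
  assert (Hr1 : th r1) by (destruct H1; auto); assert (Hr2 : th r2) by (destruct H2; auto).
  destruct (matching_pair_cases q (sb_match th Hth q Hq))
    as [(s&a&->&Hs)|[(s&t&b&->&Hs&Ht)|(c&t&->&Ht)]].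
  - destruct (pred_sigmaA_pair th s a r1 Hth Hq Hs H1) as (s1&w1&->&Hs1).
    destruct (pred_sigmaA_pair th s a r2 Hth Hq Hs H2) as (s2&w2&->&Hs2).
    destruct (HbS s s1 s2 (proj1 Hs1) (proj1 Hs2)); [left|right];
      apply (rtRel_of_leqE th Hth); auto.
  - destruct H1 as (_&_&[Hl1|Hl1]); destruct H2 as (_&_&[Hl2|Hl2]);
      destruct r1 as [u1 w1], r2 as [u2 w2]; cbn [fst snd] in Hl1, Hl2.
    + destruct (ltE_par_inl_r S C u1 s Hl1) as [s1 [-> Hs1]].
      destruct (ltE_par_inl_r S C u2 s Hl2) as [s2 [-> Hs2]].
      destruct (HbS s s1 s2 (proj1 Hs1) (proj1 Hs2)); [left|right];
        apply (rtRel_of_leqE th Hth); auto.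
    + destruct (ltE_par_inl_r S C u1 s Hl1) as [s1 [-> Hs1]].
      destruct (ltE_par_inr_r A T w2 t Hl2) as [t2 [-> Ht2]].
      eapply sync_preds_comparable; eauto.
    + destruct (ltE_par_inr_r A T w1 t Hl1) as [t1 [-> Ht1]].
      destruct (ltE_par_inl_r S C u2 s Hl2) as [s2 [-> Hs2]].
      destruct (sync_preds_comparable th s t b s2 w2 u1 t1 Hth Hq Hs Ht IH Hr2 Hs2 Hr1 Ht1);
        auto.
    + destruct (ltE_par_inr_r A T w1 t Hl1) as [t1 [-> Ht1]].
      destruct (ltE_par_inr_r A T w2 t Hl2) as [t2 [-> Ht2]].
      destruct (HbT t t1 t2 (proj1 Ht1) (proj1 Ht2)); [left|right];
        apply (rtRel_of_leqF th Hth); auto.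
  - destruct (pred_tauC_pair th c t r1 Hth Hq Ht H1) as (u1&t1&->&Ht1).
    destruct (pred_tauC_pair th c t r2 Hth Hq Ht H2) as (u2&t2&->&Ht2).
    destruct (HbT t t1 t2 (proj1 Ht1) (proj1 Ht2)); [left|right];
      apply (rtRel_of_leqF th Hth); auto.
Qed.

Lemma sb_chainBelow th q : SB th -> th q -> chainBelow th q.
Proof.
  intros Hth.
  assert (Hwf : well_founded (clos_trans _ (Rel th))).
  { destruct (sb_finite th Hth) as [l Hl].
    apply (wf_clos_trans_finite_acyclic _ l); [intros x y (Hx&_); auto|].
    intro x; apply (sb_acyclic th Hth x). }
  induction q as [q IH] using (well_founded_ind Hwf); intros Hq r1 r2 H1 H2.
  destruct (clos_rt_last_step _ _ _ H1) as [<-|[c1 [H1a H1b]]]; [right; auto|].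
  destruct (clos_rt_last_step _ _ _ H2) as [<-|[c2 [H2a H2b]]]; [left; auto|].
  destruct (imm_preds_comparable th q Hth Hq IH c1 c2 H1b H2b) as [D|D].
  - apply (IH c2 (t_step _ _ _ _ H2b)); [destruct H2b; auto| |auto]; eapply rt_trans; eauto.
  - apply (IH c1 (t_step _ _ _ _ H1b)); [destruct H1b; auto|auto|]; eapply rt_trans; eauto.
Qed.

Lemma backSeq_compESP : backSeq (compESP sigma tau).
Proof.
  intros x x1 x2 H1 H2; simpl in H1, H2.
  pose proof (pb_sec (ce_ev x)) as Hs.
  destruct (sb_chainBelow _ _ Hs (pb_in _) (pb_top (ce_ev x1)) (pb_top (ce_ev x2)))
    as [D|D]; [apply pb_prime, H1, pb_in|apply pb_prime, H2, pb_in| |];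
    [left|right]; simpl; apply (pbEv_le_of_rt _ _ _ Hs); auto.
Qed.

(** * Receptivity *)

Lemma image_compMap_inl (x : compESP sigma tau -> Prop) a :
  image (compMap sigma tau) x (inl a) ->
  exists s, sigma s = inl a /\ unionBij x (inl s, inl a).
Proof.
  intros [d [Hd Himg]]; unfold compMap in Himg.
  destruct (compEv_cases d) as [(s&a'&Ht&Hs&Hi)|(c&t&Ht&Htc&Hi)];
    rewrite Hi in Himg; [injection Himg as E; subst a'|discriminate].
  exists s; split; auto; exists d; split; auto.
  pose proof (pb_in (ce_ev d)) as Hin; rewrite Ht in Hin; exact Hin.
Qed.

Lemma image_compMap_inr (x : compESP sigma tau -> Prop) c :
  image (compMap sigma tau) x (inr c) ->
  exists t, tau t = inr c /\ unionBij x (inr c, inr t).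
Proof.
  intros [d [Hd Himg]]; unfold compMap in Himg.
  destruct (compEv_cases d) as [(s&a&Ht&Hs&Hi)|(c'&t&Ht&Htc&Hi)];
    rewrite Hi in Himg; [discriminate|injection Himg as E; subst c'].
  exists t; split; auto; exists d; split; auto.
  pose proof (pb_in (ce_ev d)) as Hin; rewrite Ht in Hin; exact Hin.
Qed.

Lemma unionBij_add (x : compESP sigma tau -> Prop) (s : CE) :
  (forall p, pb_bij (ce_ev s) p -> addPair (unionBij x) (pb_top (ce_ev s)) p) ->
  forall p, unionBij (fun e => x e \/ e = s) p <-> addPair (unionBij x) (pb_top (ce_ev s)) p.
Proof.
  intros Hsub p; split.
  - intros [e [[He| ->] Hp]]; [left; exists e; auto|auto].
  - intros [[e [He Hp]]| ->]; [exists e; auto|exists s; split; auto; apply pb_in].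
Qed.

Lemma conf_add_prime (x : compESP sigma tau -> Prop) (s : CE) : conf _ x ->
  SB (addPair (unionBij x) (pb_top (ce_ev s))) ->
  (forall r, ~ Rel (addPair (unionBij x) (pb_top (ce_ev s))) (pb_top (ce_ev s)) r) ->
  (forall p, pb_bij (ce_ev s) p -> addPair (unionBij x) (pb_top (ce_ev s)) p) ->
  conf _ (fun e => x e \/ e = s).
Proof.
  intros Hx Hs Hmax Hsub.
  pose proof (conf_compESP_sb x Hx) as HU.
  split; [apply finite_add; destruct Hx; auto|split].
  - intros e e' [He| ->] Hle; [left; eapply conf_compESP_down; eauto|]; simpl in Hle.
    destruct (classic (pb_top (ce_ev e') = pb_top (ce_ev s))) as [Hn|Hn].
    + right; apply compEv_eq, (pbEv_eq_of_top _ _ _ Hs); auto.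
    + left; destruct (Hsub _ (Hle _ (pb_in (ce_ev e')))) as [[e0 [He0 Hp0]]|]; [|contradiction].
      apply (conf_compESP_down x e0); auto; intros p Hp.
      apply (sb_sub_rt_closed (unionBij x) _ p (pb_top (ce_ev e')) HU (pb_sec _)); auto.
      * intros p' Hp'; exists e0; auto.
      * apply (clos_rt_addPair _ _ _ _ Hmax Hn).
        apply (clos_rt_pbRel_incl (pb_bij (ce_ev e'))); [intros r Hr; apply Hsub, Hle, Hr|].
        apply pb_prime; exact Hp.
  - apply con_compESP; split; [apply finite_add; destruct Hx; auto|].
    apply (sb_ext _ _ (fun p => iff_sym (unionBij_add x s Hsub p)) Hs).
Qed.

(* Every causal predecessor of the top of a negative event passes through a visible pair,
   hence through an earlier event of the configuration. *)
Lemma neg_ext_bij_incl (x : compESP sigma tau -> Prop) (s : CE) :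
  conf _ (fun e => x e \/ e = s) -> pol (compMap sigma tau s) = false ->
  forall p, pb_bij (ce_ev s) p -> addPair (unionBij x) (pb_top (ce_ev s)) p.
Proof.
  intros Hx Hpol p Hp.
  destruct (clos_rt_last_step _ _ _ (pb_prime _ p Hp)) as [->|[r [Hpr Hr]]]; [right; auto|].
  assert (Hvp : exists q0 i, pb_bij (ce_ev s) q0 /\ visible q0 i /\
    rtRel (pb_bij (ce_ev s)) r q0 /\ Rel (pb_bij (ce_ev s)) q0 (pb_top (ce_ev s))).
  { pose proof (pb_in (ce_ev s)) as Hq; pose proof (pb_sec (ce_ev s)) as Hs.
    unfold compMap in Hpol.
    destruct (compEv_cases s) as [(s'&a&Ht&Hsa&Hi)|(c&t&Ht&Htc&Hi)];
      rewrite Hi in Hpol; rewrite Ht in Hq, Hr |- *.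
    - destruct (negA_visible_pred _ s' a r Hs Hq Hsa
                  ltac:(rewrite (pol_sigmaA s' a Hsa); auto) Hr) as (s0&a0&Hq0&Hs0&_&Hrt&HR).
      exists (inl s0, inl a0), (inl a0); split; [auto|split; [simpl; rewrite Hs0|]; auto].
    - destruct (negC_visible_pred _ c t r Hs Hq Htc
                  ltac:(rewrite (pol_tauC t c Htc); auto) Hr) as (c0&t0&Hq0&Ht0&_&Hrt&HR).
      exists (inr c0, inr t0), (inr c0); split; [auto|split; [reflexivity|auto]]. }
  destruct Hvp as (q0&i&Hq0&Hv&Hrt&HR).
  destruct (visible_prime s q0 i Hq0 Hv) as [z [_ [Hz2 Hz3]]].
  destruct (conf_compESP_down _ s z Hx (or_intror eq_refl) Hz3) as [Hzx| ->].
  - left; exists z; split; auto.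
    apply (sb_sub_rt_closed (pb_bij (ce_ev s)) _ p q0 (pb_sec _) (pb_sec _) Hz3).
    + eapply rt_trans; eauto.
    + rewrite <- Hz2; apply pb_in.
  - exfalso; rewrite Hz2 in HR; apply (pbRel_neq _ _ _ HR); auto.
Qed.

Lemma receptive_sigma : receptive sigma. Proof. destruct Hsigma as (_&_&_&_&H); auto. Qed.
Lemma receptive_tau : receptive tau. Proof. destruct Htau as (_&_&_&_&H); auto. Qed.

Lemma conf_add_visible_pair (x : compESP sigma tau -> Prop) (u0 : SC) (w0 : AT) i :
  conf _ x -> fS u0 = gT w0 -> visible (u0, w0) i ->
  conf SC (fun u => (exists w, unionBij x (u, w)) \/ u = u0) ->
  conf AT (fun w => (exists u, unionBij x (u, w)) \/ w = w0) ->
  ~ (exists w, unionBij x (u0, w)) -> ~ (exists u, unionBij x (u, w0)) ->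
  exists s, (conf _ (fun e => x e \/ e = s) /\ compMap sigma tau s = i) /\
    forall s', pb_top (ce_ev s') = (u0, w0) ->
      (forall p, pb_bij (ce_ev s') p -> addPair (unionBij x) (u0, w0) p) -> s' = s.
Proof.
  intros Hx Hm Hv HcE HcF HnE HnF.
  pose proof (conf_compESP_sb x Hx) as Hth.
  pose proof (sb_addPair _ u0 w0 Hth Hm HcE HcF HnE HnF) as Hth'.
  pose (n := primeOf con_SC_incl con_AT_incl _ _ Hth' (or_intror eq_refl)).
  exists (@CompEv A B C S T sigma tau n i Hv); split; [split; [|reflexivity]|].
  - apply conf_add_prime; auto; [exact (addPair_maximal _ _ _ Hth HnE HnF)|].
    intros p Hp; apply Hp.
  - intros s' Ht' Hsub; apply compEv_eq, (pbEv_eq_of_top _ _ _ Hth'); auto.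
    intros p Hp; apply Hp.
Qed.

Lemma neg_ext_inl (x : compESP sigma tau -> Prop) a (s' : CE) :
  conf _ (fun e => x e \/ e = s') -> compMap sigma tau s' = inl a ->
  @pol (par (dual A) C) (inl a) = false ->
  exists s2, sigma s2 = inl a /\ pb_top (ce_ev s') = (inl s2, inl a) /\
    conf S (fun s => (exists w, unionBij x (inl s, w)) \/ s = s2) /\
    forall p, pb_bij (ce_ev s') p -> addPair (unionBij x) (inl s2, inl a) p.
Proof.
  intros Hx' Hs' Hpol.
  destruct (compEv_cases s') as [(s2&a2&Ht2&Hs2&Hi2)|(c2&t2&Ht2&Htc2&Hi2)];
    unfold compMap in Hs'; rewrite Hi2 in Hs'; [injection Hs' as ->|discriminate].
  assert (Hsub := neg_ext_bij_incl x s' Hx' ltac:(unfold compMap; rewrite Hi2; auto)).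
  pose proof (sb_ext _ _ (unionBij_add x s' Hsub) (conf_compESP_sb _ Hx')) as Hth'.
  rewrite Ht2 in Hsub, Hth'; exists s2; do 2 (split; auto); split; auto.
  refine (conf_ext _ _ _ _ (sb_conf_S _ Hth')); intro s; split.
  - intros [w [Hw|Hw]]; [left; eauto|right; congruence].
  - intros [[w Hw]| ->]; [exists w; left; auto|exists (inl a); right; auto].
Qed.

Lemma neg_ext_inr (x : compESP sigma tau -> Prop) c (s' : CE) :
  conf _ (fun e => x e \/ e = s') -> compMap sigma tau s' = inr c ->
  @pol (par (dual A) C) (inr c) = false ->
  exists t2, tau t2 = inr c /\ pb_top (ce_ev s') = (inr c, inr t2) /\
    conf T (fun t => (exists u, unionBij x (u, inr t)) \/ t = t2) /\
    forall p, pb_bij (ce_ev s') p -> addPair (unionBij x) (inr c, inr t2) p.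
Proof.
  intros Hx' Hs' Hpol.
  destruct (compEv_cases s') as [(s2&a2&Ht2&Hs2&Hi2)|(c2&t2&Ht2&Htc2&Hi2)];
    unfold compMap in Hs'; rewrite Hi2 in Hs'; [discriminate|injection Hs' as ->].
  assert (Hsub := neg_ext_bij_incl x s' Hx' ltac:(unfold compMap; rewrite Hi2; auto)).
  pose proof (sb_ext _ _ (unionBij_add x s' Hsub) (conf_compESP_sb _ Hx')) as Hth'.
  rewrite Ht2 in Hsub, Hth'; exists t2; do 2 (split; auto); split; auto.
  refine (conf_ext _ _ _ _ (sb_conf_T _ Hth')); intro t; split.
  - intros [u [Hu|Hu]]; [left; eauto|right; congruence].
  - intros [[u Hu]| ->]; [exists u; left; auto|exists (inr c); right; auto].
Qed.

Lemma receptive_compMap_inl (x : compESP sigma tau -> Prop) (a : A) : conf _ x ->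
  @pol (par (dual A) C) (inl a) = false -> ~ image (compMap sigma tau) x (inl a) ->
  conf (par (dual A) C) (fun i => image (compMap sigma tau) x i \/ i = inl a) ->
  exists s, (conf _ (fun e => x e \/ e = s) /\ compMap sigma tau s = inl a) /\
    forall s', conf _ (fun e => x e \/ e = s') -> compMap sigma tau s' = inl a -> s' = s.
Proof.
  intros Hx Hpol Hni Hcf.
  pose proof (conf_compESP_sb x Hx) as Hth.
  assert (Hvis : forall a', leq a' a -> a' <> a ->
            exists s', sigma s' = inl a' /\ unionBij x (inl s', inl a')).
  { intros a' Hle Hne; apply image_compMap_inl.
    destruct (proj1 (proj2 Hcf) (inl a) (inl a') (or_intror eq_refl) Hle) as [H|H]; auto.
    injection H as ->; contradiction. }
  assert (HnS : ~ image sigma (fun s => exists w, unionBij x (inl s, w)) (inl a)).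
  { intros [s0 [[w Hw] Hs0]]; apply Hni.
    rewrite (match_sigmaA s0 w a (sb_match _ Hth _ Hw) Hs0) in Hw.
    apply (visible_in_image x _ _ Hx Hw); simpl; rewrite Hs0; reflexivity. }
  assert (HcB : conf (par (dual A) B)
            (fun v => image sigma (fun s => exists w, unionBij x (inl s, w)) v \/ v = inl a)).
  { apply conf_add_conflict_free.
    - exact (con_par_conflict_free (dual A) B (arena_conflict_free A HA)
               (arena_conflict_free B HB)).
    - apply (proj1 (proj2 isMap_sigma)), (sb_conf_S _ Hth).
    - intros v Hle Hne; destruct (leq_par_inl_r (dual A) B v a Hle) as [a' [-> Ha']].
      destruct (Hvis a' Ha' (fun E => Hne (f_equal inl E))) as [s' [Hs' Hu]].
      exists s'; split; eauto. }
  destruct (receptive_sigma _ (sb_conf_S _ Hth) (inl a) Hpol HnS HcB)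
    as [sn [[Hcn Hsn] Huniq]].
  assert (HcA : conf A (fun a' => (exists u, unionBij x (u, inl a')) \/ a' = a)).
  { apply conf_add_conflict_free; [exact (arena_conflict_free A HA)| |].
    - apply (conf_par_inl A T (fun w => exists u, unionBij x (u, w)) (sb_confF _ Hth)).
    - intros a' Hle Hne; destruct (Hvis a' Hle Hne) as [s' [_ Hu]]; eauto. }
  destruct (conf_add_visible_pair x (inl sn) (inl a) (inl a) Hx
              ltac:(simpl; rewrite Hsn; reflexivity) ltac:(simpl; rewrite Hsn; reflexivity)
              (conf_par_add_inl S C _ sn (sb_confE _ Hth) Hcn)
              (conf_par_add_inl A T _ a (sb_confF _ Hth) HcA))
    as [s [Hs Hs_uniq]].
  - intros [w Hw]; apply HnS; exists sn; split; eauto.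
  - intros [u Hu]; apply Hni.
    destruct (match_A u a (sb_match _ Hth _ Hu)) as [s0 [-> Hs0]].
    apply (visible_in_image x _ _ Hx Hu); simpl; rewrite Hs0; reflexivity.
  - exists s; split; auto; intros s' Hx' Hs'.
    destruct (neg_ext_inl x a s' Hx' Hs' Hpol) as (s2&Hs2&Ht2&Hc2&Hsub).
    rewrite (Huniq s2 Hc2 Hs2) in Ht2, Hsub; auto.
Qed.

Lemma receptive_compMap_inr (x : compESP sigma tau -> Prop) (c : C) : conf _ x ->
  @pol (par (dual A) C) (inr c) = false -> ~ image (compMap sigma tau) x (inr c) ->
  conf (par (dual A) C) (fun i => image (compMap sigma tau) x i \/ i = inr c) ->
  exists s, (conf _ (fun e => x e \/ e = s) /\ compMap sigma tau s = inr c) /\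
    forall s', conf _ (fun e => x e \/ e = s') -> compMap sigma tau s' = inr c -> s' = s.
Proof.
  intros Hx Hpol Hni Hcf.
  pose proof (conf_compESP_sb x Hx) as Hth.
  assert (Hvis : forall c', leq c' c -> c' <> c ->
            exists t', tau t' = inr c' /\ unionBij x (inr c', inr t')).
  { intros c' Hle Hne; apply image_compMap_inr.
    destruct (proj1 (proj2 Hcf) (inr c) (inr c') (or_intror eq_refl) Hle) as [H|H]; auto.
    injection H as ->; contradiction. }
  assert (HnT : ~ image tau (fun t => exists u, unionBij x (u, inr t)) (inr c)).
  { intros [t0 [[u Hu] Ht0]]; apply Hni.
    rewrite (match_tauC u t0 c (sb_match _ Hth _ Hu) Ht0) in Hu.
    apply (visible_in_image x _ _ Hx Hu); reflexivity. }
  assert (HcB : conf (par (dual B) C)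
            (fun v => image tau (fun t => exists u, unionBij x (u, inr t)) v \/ v = inr c)).
  { apply conf_add_conflict_free.
    - exact (con_par_conflict_free (dual B) C (arena_conflict_free B HB)
               (arena_conflict_free C HC)).
    - apply (proj1 (proj2 isMap_tau)), (sb_conf_T _ Hth).
    - intros v Hle Hne; destruct (leq_par_inr_r (dual B) C v c Hle) as [c' [-> Hc']].
      destruct (Hvis c' Hc' (fun E => Hne (f_equal inr E))) as [t' [Ht' Hu]].
      exists t'; split; eauto. }
  destruct (receptive_tau _ (sb_conf_T _ Hth) (inr c) Hpol HnT HcB)
    as [tn [[Hcn Htn] Huniq]].
  assert (HcC : conf C (fun c' => (exists w, unionBij x (inr c', w)) \/ c' = c)).
  { apply conf_add_conflict_free; [exact (arena_conflict_free C HC)| |].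
    - apply (conf_par_inr S C (fun u => exists w, unionBij x (u, w)) (sb_confE _ Hth)).
    - intros c' Hle Hne; destruct (Hvis c' Hle Hne) as [t' [_ Hu]]; eauto. }
  destruct (conf_add_visible_pair x (inr c) (inr tn) (inr c) Hx
              ltac:(simpl; rewrite Htn; reflexivity) eq_refl
              (conf_par_add_inr S C _ c (sb_confE _ Hth) HcC)
              (conf_par_add_inr A T _ tn (sb_confF _ Hth) Hcn))
    as [s [Hs Hs_uniq]].
  - intros [w Hw]; apply Hni.
    destruct (match_C c w (sb_match _ Hth _ Hw)) as [t0 [-> Ht0]].
    apply (visible_in_image x _ _ Hx Hw); reflexivity.
  - intros [u Hu]; apply HnT; exists tn; split; eauto.
  - exists s; split; auto; intros s' Hx' Hs'.
    destruct (neg_ext_inr x c s' Hx' Hs' Hpol) as (t2&Ht2&Htop&Hc2&Hsub).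
    rewrite (Huniq t2 Hc2 Ht2) in Htop, Hsub; auto.
Qed.

Lemma receptive_compMap : receptive (compMap sigma tau).
Proof.
  intros x Hx [a|c] Hpol Hni Hcf;
    [apply receptive_compMap_inl|apply receptive_compMap_inr]; auto.
Qed.

Lemma isStrategy_compMap : isStrategy (compMap sigma tau).
Proof.
  split; [apply isES_compESP|split; [apply isES_par_arena; auto|]].
  split; [apply isMap_compMap|split; [apply courteous_compMap|apply receptive_compMap]].
Qed.
End Composition.

Theorem mainTheorem6 (A B C S T : esp)
  (sigma : S -> par (dual A) B) (tau : T -> par (dual B) C) :
  isArena A -> isArena B -> isArena C ->
  isStrategy sigma -> backSeq S ->
  isStrategy tau -> backSeq T ->
  isStrategy (compMap sigma tau) /\ backSeq (compESP sigma tau).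
Proof.
  intros HA HB HC Hsigma HbS Htau HbT; split.
  - apply isStrategy_compMap; auto.
  - apply backSeq_compESP; auto.
Qed.
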